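(* Let $P,PA$ be labelings, $c$ any command, and $\rho_1,\rho_2,\mu_1,\mu_2$ states. Assume $\mathtt b\notin\mathrm{UsedVars}(c)$, $\rho_1(\mathtt b)=\rho_2(\mathtt b)=0$, $|a|_{\mu_1}>0$ and $|a|_{\mu_2}>0$ for every array $a$, $\rho_1\sim_P\rho_2$, $\mu_1\sim_{PA}\mu_2$, and $\langle c,\rho_1,\mu_1\rangle\approx\langle c,\rho_2,\mu_2\rangle$. Let $(\hat c,P',PA')=\mathcal F(c,P,PA,\mathtt{true})$. Then $\langle T(\hat c),\rho_1,\mu_1,\mathtt{false}\rangle\approx_s\langle T(\hat c),\rho_2,\mu_2,\mathtt{false}\rangle$.
   Context: Language AWhile: scalar variables $X\in\mathcal V$, arrays $a\in\mathcal A$; $e::=n\mid X\mid\mathrm{op}_{\mathbb N}(e,\dots,e)\mid be\,?\,e_1:e_2$; $be::=\mathtt{true}\mid\mathtt{false}\mid\mathrm{cmp}(e,e)\mid\mathrm{op}_{\mathbb B}(be,\dots,be)$; $c::=\mathtt{skip}\mid X:=e\mid c_1;c_2\mid\mathtt{if}\ be\ \mathtt{then}\ c_1\ \mathtt{else}\ c_2\mid\mathtt{while}\ be\ \mathtt{do}\ c\mid X\leftarrow a[e]\mid a[e]\leftarrow e'$. Scalar state $\rho:\mathcal V\to\mathbb N$; array state $\mu$ with sizes $|a|_\mu$ and values $\mu(a)[i]$; $[\![\cdot]\!]_\rho$ pure evaluation. $\mathrm{UsedVars}(c)$: scalar variables occurring in $c$; $\mathtt b$ a reserved scalar variable. Sequential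 semantics: $X:=e\to\mathtt{skip}$ updating $X$; $c_1;c_2\xrightarrow{o}c_1';c_2$ if $c_1\xrightarrow{o}c_1'$; $\mathtt{skip};c\to c$; conditional goes to branch $v=[\![be]\!]_\rho$ observing $\mathrm{branch}(v)$; $\mathtt{while}\ be\ \mathtt{do}\ c\to\mathtt{if}\ be\ \mathtt{then}\ (c;\mathtt{while}\ be\ \mathtt{do}\ c)\ \mathtt{else}\ \mathtt{skip}$; $X\leftarrow a[ie]$ with $i=[\![ie]\!]_\rho<|a|_\mu$ sets $X:=\mu(a)[i]$ observing $\mathrm{read}(a,i)$; $a[ie]\leftarrow e$ with $i<|a|_\mu$ sets $\mu[a[i]\mapsto[\![e]\!]_\rho]$ observing $\mathrm{write}(a,i)$. $\langle c_1,\rho_1,\mu_1\rangle\approx\langle c_2,\rho_2,\mu_2\rangle$ iff for all multi-step executions $\langle c_k,\rho_k,\mu_k\rangle\xrightarrow{O_k}{}^*$ (any prefix), one of $O_1,O_2$ is a prefix of the other. Speculative semantics: configurations $\langle c,\rho,\mu,\beta\rangle$; non-observing rules as sequentially (flag kept, no directive). Conditional: with directive $\mathit{step}$ as sequentially; with $\mathit{force}$ go to branch $\neg[\![be]\!]_\rho$ and set $\beta:=\mathtt{true}$; obs $\mathrm{branch}([\![be]\!]_\rho)$. Reads/writes with $\mathit{step}$ as sequentially. Read with $\mathrm{load}(a',j)$: requires $\beta=\mathtt{true}$, $i=[\![ie]\!]_\rho\ge|a|_\mu$, $j<|a'|_\mu$, sets $X:=\mu(a')[j]$, obs $\mathrm{read}(a,i)$.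 Write with $\mathrm{store}(a',j)$: requires $\beta=\mathtt{true}$, $i\ge|a|_\mu$, $j<|a'|_\mu$, sets $\mu[a'[j]\mapsto[\![e]\!]_\rho]$, obs $\mathrm{write}(a,i)$. $\langle c_1,\rho_1,\mu_1,\beta_1\rangle\approx_s\langle c_2,\rho_2,\mu_2,\beta_2\rangle$ iff for all $D,O_1,O_2$, whenever both multi-step with the same directive list $D$ producing $O_1,O_2$, $O_1=O_2$. Labels: $\mathtt{true}$=public, $\mathtt{false}$=secret; $\ell_1\sqsubseteq\ell_2$ iff $\ell_2=\mathtt{true}\Rightarrow\ell_1=\mathtt{true}$; $\ell_1\sqcup\ell_2=\ell_1\wedge\ell_2$, lifted pointwise to labelings. $P(e),P(be)$ public iff all variables occurring are public. $\rho_1\sim_P\rho_2$: agreement on public scalar variables; $\mu_1\sim_{PA}\mu_2$: agreement on sizes and contents of public arrays. Annotated commands: $\hat c::=\mathtt{skip}\mid X:=e\mid \hat c_1;_{P,PA}\hat c_2\mid\mathtt{if}_\ell\ be\ \mathtt{then}\ \hat c_1\ \mathtt{else}\ \hat c_2\mid\mathtt{while}_{\ell,P,PA}\ be\ \mathtt{do}\ \hat c\mid X\leftarrow_{\ell_X,\ell_i}a[e]\mid a[e]\leftarrow_{\ell_i}e'$. Flow-sensitive IFC analysis $\mathcal F(c,P,PA,pc)=(\hat c,P',PA')$: $\mathtt{skip}\mapsto(\mathtt{skip},P,PA)$; $X:=e\mapsto(X:=e,P[X\mapsto P(e)],PA)$; $c_1;c_2\mapsto(\hat c_1;_{P_1,PA_1}\hat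 c_2,P_2,PA_2)$ where $(\hat c_1,P_1,PA_1)=\mathcal F(c_1,P,PA,pc)$, $(\hat c_2,P_2,PA_2)=\mathcal F(c_2,P_1,PA_1,pc)$; $\mathtt{if}\ be\ \mathtt{then}\ c_1\ \mathtt{else}\ c_2\mapsto(\mathtt{if}_{P(be)}\ be\ \mathtt{then}\ \hat c_1\ \mathtt{else}\ \hat c_2,P_1\sqcup P_2,PA_1\sqcup PA_2)$ where $(\hat c_k,P_k,PA_k)=\mathcal F(c_k,P,PA,pc\sqcup P(be))$; $\mathtt{while}\ be\ \mathtt{do}\ c\mapsto(\mathtt{while}_{P_f(be),P_f,PA_f}\ be\ \mathtt{do}\ \hat c,P_f,PA_f)$ where $\hat c$ is the first component of $\mathcal F(c,P_f,PA_f,pc\sqcup P_f(be))$ and $(P_f,PA_f)$ is a fixpoint of $G(P'',PA'')=(P''',PA''')\sqcup(P,PA)$, with $(\_,P''',PA''')=\mathcal F(c,P'',PA'',pc\sqcup P''(be))$, obtained by iterating $G$ from $(P,PA)$ (bounded by the number of variables and arrays assigned in $c$); $X\leftarrow a[i]\mapsto(X\leftarrow_{\ell,P(i)}a[i],P[X\mapsto\ell],PA)$ with $\ell=pc\sqcup P(i)\sqcup PA(a)$; $a[i]\leftarrow e\mapsto(a[i]\leftarrow_{P(i)}e,P,PA[a\mapsto PA(a)\sqcup pc\sqcup P(i)\sqcup P(e)])$. Translation $T$ (FS-FvSLH) of annotated commands: with $m(i)=(\mathtt b==1)\,?\,0:i$ and $B_\ell(be)=be$ if $\ell=\mathtt{true}$,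 $B_\ell(be)=(\mathtt b==0\ \&\&\ be)$ if $\ell=\mathtt{false}$: $\mathtt{skip}$, $X:=e$ unchanged; $\hat c_1;_{P,PA}\hat c_2\mapsto T(\hat c_1);T(\hat c_2)$; $\mathtt{if}_\ell\ be\ \mathtt{then}\ \hat c_1\ \mathtt{else}\ \hat c_2\mapsto\mathtt{if}\ B_\ell(be)\ \mathtt{then}\ (\mathtt b:=B_\ell(be)\,?\,\mathtt b:1;T(\hat c_1))\ \mathtt{else}\ (\mathtt b:=B_\ell(be)\,?\,1:\mathtt b;T(\hat c_2))$; $\mathtt{while}_{\ell,P,PA}\ be\ \mathtt{do}\ \hat c\mapsto(\mathtt{while}\ B_\ell(be)\ \mathtt{do}\ (\mathtt b:=B_\ell(be)\,?\,\mathtt b:1;T(\hat c)));\ \mathtt b:=B_\ell(be)\,?\,1:\mathtt b$; $X\leftarrow_{\ell_X,\ell_i}a[i]\mapsto(X\leftarrow a[i];X:=(\mathtt b==1)\,?\,0:X)$ if $\ell_X=\ell_i=\mathtt{true}$, $X\leftarrow a[i]$ if $\ell_X=\mathtt{false},\ell_i=\mathtt{true}$, and $X\leftarrow a[m(i)]$ if $\ell_i=\mathtt{false}$; $a[i]\leftarrow_{\ell_i}e\mapsto a[i]\leftarrow e$ if $\ell_i=\mathtt{true}$ and $a[m(i)]\leftarrow e$ if $\ell_i=\mathtt{false}$. *)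

From Stdlib Require Import String List Arith Bool.
Import ListNotations.


Definition total_map (A : Type) := string -> A.
Definition t_update {A : Type} (m : total_map A) (x : string) (v : A) : total_map A :=
  fun y => if String.eqb x y then v else m y.

(* op_N / op_B / cmp are arbitrary (binary) operators given by their semantics. *)
Inductive aexp : Type :=
  | ANum (n : nat)
  | AVar (x : string)
  | AOp (f : nat -> nat -> nat) (e1 e2 : aexp)
  | ACond (be : bexp) (e1 e2 : aexp)
with bexp : Type :=
  | BTrue
  | BFalse
  | BCmp (f : nat -> nat -> bool) (e1 e2 : aexp)
  | BOp (f : bool -> bool -> bool) (b1 b2 : bexp).

Inductive com : Type :=
  | Skip
  | Asgn (x : string) (e : aexp)
  | Seq (c1 c2 : com)
  | If (be : bexp) (c1 c2 : com)
  | While (be : bexp) (c : com)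
  | ARead (x : string) (a : string) (i : aexp)
  | AWrite (a : string) (i : aexp) (e : aexp).

Definition state := total_map nat.
Definition mem := total_map (list nat).     (* array state mu; |a| = length (mu a) *)

Fixpoint aeval (rho : state) (e : aexp) : nat :=
  match e with
  | ANum n => n
  | AVar x => rho x
  | AOp f e1 e2 => f (aeval rho e1) (aeval rho e2)
  | ACond be e1 e2 => if beval rho be then aeval rho e1 else aeval rho e2
  end
with beval (rho : state) (be : bexp) : bool :=
  match be with
  | BTrue => true
  | BFalse => false
  | BCmp f e1 e2 => f (aeval rho e1) (aeval rho e2)
  | BOp f b1 b2 => f (beval rho b1) (beval rho b2)
  end.

Fixpoint upd (l : list nat) (i v : nat) : list nat :=
  match l, i with
  | [], _ => []
  | _ :: t, 0 => v :: t
  | h :: t, S i' => h :: upd t i' v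
  end.

Fixpoint avars (e : aexp) : list string :=
  match e with
  | ANum _ => []
  | AVar x => [x]
  | AOp _ e1 e2 => avars e1 ++ avars e2
  | ACond be e1 e2 => bvars be ++ avars e1 ++ avars e2
  end
with bvars (be : bexp) : list string :=
  match be with
  | BTrue | BFalse => []
  | BCmp _ e1 e2 => avars e1 ++ avars e2
  | BOp _ b1 b2 => bvars b1 ++ bvars b2
  end.

Fixpoint used_vars (c : com) : list string :=
  match c with
  | Skip => []
  | Asgn x e => x :: avars e
  | Seq c1 c2 => used_vars c1 ++ used_vars c2
  | If be c1 c2 => bvars be ++ used_vars c1 ++ used_vars c2
  | While be c => bvars be ++ used_vars c
  | ARead x a i => x :: avars i
  | AWrite a i e => avars i ++ avars e
  end.

(* the reserved misspeculation-flag variable *)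
Definition bvar : string := "b"%string.

Inductive observation : Type :=
  | OBranch (v : bool)
  | ORead (a : string) (i : nat)
  | OWrite (a : string) (i : nat).

Inductive direction : Type :=
  | DStep
  | DForce
  | DLoad (a : string) (j : nat)
  | DStore (a : string) (j : nat).

Inductive seq_eval_small_step :
  com -> state -> mem -> com -> state -> mem -> list observation -> Prop :=
  | SSM_Asgn : forall x e rho mu,
      seq_eval_small_step (Asgn x e) rho mu Skip (t_update rho x (aeval rho e)) mu []
  | SSM_Seq : forall c1 rho mu c1' rho' mu' os c2,
      seq_eval_small_step c1 rho mu c1' rho' mu' os ->
      seq_eval_small_step (Seq c1 c2) rho mu (Seq c1' c2) rho' mu' os
  | SSM_Seq_Skip : forall c rho mu,
      seq_eval_small_step (Seq Skip c) rho mu c rho mu []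
  | SSM_If : forall be c1 c2 rho mu,
      seq_eval_small_step (If be c1 c2) rho mu
        (if beval rho be then c1 else c2) rho mu [OBranch (beval rho be)]
  | SSM_While : forall be c rho mu,
      seq_eval_small_step (While be c) rho mu
        (If be (Seq c (While be c)) Skip) rho mu []
  | SSM_ARead : forall x a ie rho mu i,
      aeval rho ie = i -> i < length (mu a) ->
      seq_eval_small_step (ARead x a ie) rho mu
        Skip (t_update rho x (nth i (mu a) 0)) mu [ORead a i]
  | SSM_AWrite : forall a ie e rho mu i n,
      aeval rho e = n -> aeval rho ie = i -> i < length (mu a) ->
      seq_eval_small_step (AWrite a ie e) rho mu
        Skip rho (t_update mu a (upd (mu a) i n)) [OWrite a i].

Inductive multi_seq : com -> state -> mem -> com -> state -> mem -> list observation -> Prop :=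
  | multi_seq_refl : forall c rho mu, multi_seq c rho mu c rho mu []
  | multi_seq_trans : forall c1 rho1 mu1 c2 rho2 mu2 c3 rho3 mu3 os1 os2,
      seq_eval_small_step c1 rho1 mu1 c2 rho2 mu2 os1 ->
      multi_seq c2 rho2 mu2 c3 rho3 mu3 os2 ->
      multi_seq c1 rho1 mu1 c3 rho3 mu3 (os1 ++ os2).

Definition prefix {X : Type} (l1 l2 : list X) : Prop := exists l, l2 = (l1 ++ l)%list.

Definition seq_same_obs (c1 : com) (rho1 : state) (mu1 : mem)
                        (c2 : com) (rho2 : state) (mu2 : mem) : Prop :=
  forall c1' rho1' mu1' c2' rho2' mu2' os1 os2,
    multi_seq c1 rho1 mu1 c1' rho1' mu1' os1 ->
    multi_seq c2 rho2 mu2 c2' rho2' mu2' os2 ->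
    prefix os1 os2 \/ prefix os2 os1.

Inductive spec_eval_small_step :
  com -> state -> mem -> bool -> com -> state -> mem -> bool ->
  list direction -> list observation -> Prop :=
  | Spec_Asgn : forall x e rho mu bt,
      spec_eval_small_step (Asgn x e) rho mu bt Skip (t_update rho x (aeval rho e)) mu bt [] []
  | Spec_Seq : forall c1 rho mu bt c1' rho' mu' bt' ds os c2,
      spec_eval_small_step c1 rho mu bt c1' rho' mu' bt' ds os ->
      spec_eval_small_step (Seq c1 c2) rho mu bt (Seq c1' c2) rho' mu' bt' ds os
  | Spec_Seq_Skip : forall c rho mu bt,
      spec_eval_small_step (Seq Skip c) rho mu bt c rho mu bt [] []
  | Spec_If : forall be c1 c2 rho mu bt,
      spec_eval_small_step (If be c1 c2) rho mu bt
        (if beval rho be then c1 else c2) rho mu bt [DStep] [OBranch (beval rho be)]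
  | Spec_If_F : forall be c1 c2 rho mu bt,
      spec_eval_small_step (If be c1 c2) rho mu bt
        (if beval rho be then c2 else c1) rho mu true [DForce] [OBranch (beval rho be)]
  | Spec_While : forall be c rho mu bt,
      spec_eval_small_step (While be c) rho mu bt
        (If be (Seq c (While be c)) Skip) rho mu bt [] []
  | Spec_ARead : forall x a ie rho mu bt i,
      aeval rho ie = i -> i < length (mu a) ->
      spec_eval_small_step (ARead x a ie) rho mu bt
        Skip (t_update rho x (nth i (mu a) 0)) mu bt [DStep] [ORead a i]
  | Spec_ARead_U : forall x a ie rho mu i a' j,
      aeval rho ie = i -> i >= length (mu a) -> j < length (mu a') ->
      spec_eval_small_step (ARead x a ie) rho mu true
        Skip (t_update rho x (nth j (mu a') 0)) mu true [DLoad a' j] [ORead a i]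
  | Spec_AWrite : forall a ie e rho mu bt i n,
      aeval rho e = n -> aeval rho ie = i -> i < length (mu a) ->
      spec_eval_small_step (AWrite a ie e) rho mu bt
        Skip rho (t_update mu a (upd (mu a) i n)) bt [DStep] [OWrite a i]
  | Spec_AWrite_U : forall a ie e rho mu i n a' j,
      aeval rho e = n -> aeval rho ie = i -> i >= length (mu a) -> j < length (mu a') ->
      spec_eval_small_step (AWrite a ie e) rho mu true
        Skip rho (t_update mu a' (upd (mu a') j n)) true [DStore a' j] [OWrite a i].

Inductive multi_spec :
  com -> state -> mem -> bool -> com -> state -> mem -> bool ->
  list direction -> list observation -> Prop :=
  | multi_spec_refl : forall c rho mu bt, multi_spec c rho mu bt c rho mu bt [] []
  | multi_spec_trans : forall c1 rho1 mu1 bt1 c2 rho2 mu2 bt2 c3 rho3 mu3 bt3 ds1 ds2 os1 os2,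
      spec_eval_small_step c1 rho1 mu1 bt1 c2 rho2 mu2 bt2 ds1 os1 ->
      multi_spec c2 rho2 mu2 bt2 c3 rho3 mu3 bt3 ds2 os2 ->
      multi_spec c1 rho1 mu1 bt1 c3 rho3 mu3 bt3 (ds1 ++ ds2) (os1 ++ os2).

Definition spec_same_obs (c1 : com) (rho1 : state) (mu1 : mem) (bt1 : bool)
                         (c2 : com) (rho2 : state) (mu2 : mem) (bt2 : bool) : Prop :=
  forall ds c1' rho1' mu1' bt1' c2' rho2' mu2' bt2' os1 os2,
    multi_spec c1 rho1 mu1 bt1 c1' rho1' mu1' bt1' ds os1 ->
    multi_spec c2 rho2 mu2 bt2 c2' rho2' mu2' bt2' ds os2 ->
    os1 = os2.

(* true = public, false = secret; join = conjunction *)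
Definition label := bool.
Definition join (l1 l2 : label) : label := l1 && l2.
Definition pub_vars := total_map label.
Definition pub_arrs := total_map label.
Definition join_pub (P1 P2 : total_map label) : total_map label :=
  fun x => join (P1 x) (P2 x).

Definition label_of_aexp (P : pub_vars) (e : aexp) : label :=
  forallb P (avars e).
Definition label_of_bexp (P : pub_vars) (be : bexp) : label :=
  forallb P (bvars be).

Definition pub_equiv (P : total_map label) {X : Type} (s1 s2 : total_map X) : Prop :=
  forall x, P x = true -> s1 x = s2 x.

Inductive acom : Type :=
  | ASkip
  | AAsgn (x : string) (e : aexp)
  | ASeq (c1 : acom) (P : pub_vars) (PA : pub_arrs) (c2 : acom)
  | AIf (l : label) (be : bexp) (c1 c2 : acom)
  | AWhile (l : label) (P : pub_vars) (PA : pub_arrs) (be : bexp) (c : acom)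
  | AARead (x : string) (lx li : label) (a : string) (i : aexp)
  | AAWrite (a : string) (i : aexp) (li : label) (e : aexp).

(* number of assignment targets in c (with repetitions): an upper bound on the
   number of variables and arrays assigned in c *)
Fixpoint assigned_count (c : com) : nat :=
  match c with
  | Skip => 0
  | Asgn _ _ => 1
  | Seq c1 c2 => assigned_count c1 + assigned_count c2
  | If _ c1 c2 => assigned_count c1 + assigned_count c2
  | While _ c => assigned_count c
  | ARead _ _ _ => 1
  | AWrite _ _ _ => 1
  end.

(* flow-sensitive IFC analysis F(c,P,PA,pc) = (ĉ, P', PA') *)
Fixpoint static_tracking (c : com) (P : pub_vars) (PA : pub_arrs) (pc : label)
  : acom * pub_vars * pub_arrs :=
  match c with
  | Skip => (ASkip, P, PA)
  | Asgn x e => (AAsgn x e, t_update P x (label_of_aexp P e), PA)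
  | Seq c1 c2 =>
      let '(ac1, P1, PA1) := static_tracking c1 P PA pc in
      let '(ac2, P2, PA2) := static_tracking c2 P1 PA1 pc in
      (ASeq ac1 P1 PA1 ac2, P2, PA2)
  | If be c1 c2 =>
      let l := label_of_bexp P be in
      let '(ac1, P1, PA1) := static_tracking c1 P PA (join pc l) in
      let '(ac2, P2, PA2) := static_tracking c2 P PA (join pc l) in
      (AIf l be ac1 ac2, join_pub P1 P2, join_pub PA1 PA2)
  | While be c1 =>
      let G := fun (st : pub_vars * pub_arrs) =>
        let '(P'', PA'') := st in
        let '(_, P3, PA3) := static_tracking c1 P'' PA'' (join pc (label_of_bexp P'' be)) in
        (join_pub P3 P, join_pub PA3 PA) in
      let '(Pf, PAf) := Nat.iter (assigned_count c1) G (P, PA) in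
      let '(ac1, _, _) := static_tracking c1 Pf PAf (join pc (label_of_bexp Pf be)) in
      (AWhile (label_of_bexp Pf be) Pf PAf be ac1, Pf, PAf)
  | ARead x a i =>
      let l := join pc (join (label_of_aexp P i) (PA a)) in
      (AARead x l (label_of_aexp P i) a i, t_update P x l, PA)
  | AWrite a i e =>
      (AAWrite a i (label_of_aexp P i) e, P,
       t_update PA a (join (PA a) (join pc (join (label_of_aexp P i) (label_of_aexp P e)))))
  end.

Definition bEq (n : nat) : bexp := BCmp Nat.eqb (AVar bvar) (ANum n).
Definition mask_index (i : aexp) : aexp := ACond (bEq 1) (ANum 0) i.
Definition B_of (l : label) (be : bexp) : bexp :=
  if l then be else BOp andb (bEq 0) be.

Fixpoint fs_flex_slh (c : acom) : com :=
  match c with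
  | ASkip => Skip
  | AAsgn x e => Asgn x e
  | ASeq c1 _ _ c2 => Seq (fs_flex_slh c1) (fs_flex_slh c2)
  | AIf l be c1 c2 =>
      If (B_of l be)
         (Seq (Asgn bvar (ACond (B_of l be) (AVar bvar) (ANum 1))) (fs_flex_slh c1))
         (Seq (Asgn bvar (ACond (B_of l be) (ANum 1) (AVar bvar))) (fs_flex_slh c2))
  | AWhile l _ _ be c1 =>
      Seq (While (B_of l be)
             (Seq (Asgn bvar (ACond (B_of l be) (AVar bvar) (ANum 1))) (fs_flex_slh c1)))
          (Asgn bvar (ACond (B_of l be) (ANum 1) (AVar bvar)))
  | AARead x lx li a i =>
      if li then
        (if lx then Seq (ARead x a i) (Asgn x (ACond (bEq 1) (ANum 0) (AVar x)))
         else ARead x a i)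
      else ARead x a (mask_index i)
  | AAWrite a i li e =>
      if li then AWrite a i e else AWrite a (mask_index i) e
  end.

From Stdlib Require Import String List Bool Lia.
From Stdlib Require Import FunctionalExtensionality.
Import ListNotations.

(* The translated program is related to the source program by a simulation [sim],
   indexed by the labels of the analysis before and after, which two speculative runs
   driven by the same directives preserve in lockstep.  Until a branch is forced, both
   runs follow the source program: sequential noninterference of the source makes their
   observations agree, and the labels keep public variables and arrays equal.  At loops
   this needs the labels to be a fixpoint of the analysis, which the bounded iteration
   reaches because every strict step makes some assigned variable or array secret.
   After a forced branch, the first instruction of the wrong branch sets [b] to 1; from
   then on secret branch conditions are false, secret indices are masked to 0 and values
   read from public arrays at public indices are zeroed, so the runs only observe public
   data and their memories need no longer be related. *)

(** * Labelings *)

(* [pub_incl P Q] is [Q ⊑ P] pointwise, in the paper's order on labels. *)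
Definition pub_incl (P Q : total_map label) : Prop :=
  forall x, P x = true -> Q x = true.

Lemma pub_incl_refl P : pub_incl P P.
Proof. unfold pub_incl; auto. Qed.

Lemma pub_incl_trans P Q S : pub_incl P Q -> pub_incl Q S -> pub_incl P S.
Proof. unfold pub_incl; auto. Qed.

Lemma join_pub_incl_l P Q : pub_incl (join_pub P Q) P.
Proof. unfold pub_incl, join_pub, join; intros x H. apply andb_prop in H; tauto. Qed.

Lemma join_pub_incl_r P Q : pub_incl (join_pub P Q) Q.
Proof. unfold pub_incl, join_pub, join; intros x H. apply andb_prop in H; tauto. Qed.

Lemma join_pub_mono P1 P2 Q1 Q2 :
  pub_incl P1 P2 -> pub_incl Q1 Q2 -> pub_incl (join_pub P1 Q1) (join_pub P2 Q2).
Proof.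
  unfold pub_incl, join_pub, join; intros HP HQ x H.
  apply andb_prop in H as [H1 H2]. rewrite HP, HQ; auto.
Qed.

Lemma pub_incl_update P Q x (l l' : label) :
  pub_incl P Q -> (l = true -> l' = true) -> pub_incl (t_update P x l) (t_update Q x l').
Proof. unfold pub_incl, t_update; intros. destruct (String.eqb x x0); auto. Qed.

Lemma t_update_eq {A} (m : total_map A) x v : t_update m x v x = v.
Proof. unfold t_update. now rewrite String.eqb_refl. Qed.

Lemma t_update_neq {A} (m : total_map A) x y v : x <> y -> t_update m x v y = m y.
Proof. unfold t_update; intros H. apply String.eqb_neq in H. now rewrite H. Qed.

Lemma t_update_same {A} (m : total_map A) x v : m x = v -> t_update m x v = m.
Proof.
  intros <-. apply functional_extensionality; intros y.
  unfold t_update. destruct (String.eqb_spec x y); congruence.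
Qed.

Lemma t_update_shadow {A} (m : total_map A) x v w :
  t_update (t_update m x v) x w = t_update m x w.
Proof.
  apply functional_extensionality; intros y.
  unfold t_update. destruct (String.eqb x y); auto.
Qed.

Lemma pub_equiv_incl {X} P Q (s1 s2 : total_map X) :
  pub_incl Q P -> pub_equiv P s1 s2 -> pub_equiv Q s1 s2.
Proof. unfold pub_equiv, pub_incl; auto. Qed.

Lemma pub_equiv_update {X} P Q (s1 s2 : total_map X) x (l : label) v1 v2 :
  pub_equiv P s1 s2 -> pub_incl Q (t_update P x l) -> (l = true -> v1 = v2) ->
  pub_equiv Q (t_update s1 x v1) (t_update s2 x v2).
Proof.
  unfold pub_equiv, pub_incl, t_update; intros Hs HQ Hv y Hy.
  apply HQ in Hy. destruct (String.eqb x y); auto.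
Qed.

Lemma pub_equiv_update_same {X} P (s1 s2 : total_map X) x v :
  pub_equiv P s1 s2 -> pub_equiv P (t_update s1 x v) (t_update s2 x v).
Proof.
  intros Hs. apply (pub_equiv_update P P _ _ x true); auto.
  unfold pub_incl, t_update; intros y Hy. destruct (String.eqb x y); auto.
Qed.

Lemma pub_equiv_write PA (m1 m2 : mem) a (l : label) i1 i2 v1 v2 :
  pub_equiv PA m1 m2 -> (l = true -> PA a = true /\ i1 = i2 /\ v1 = v2) ->
  pub_equiv (t_update PA a l)
    (t_update m1 a (upd (m1 a) i1 v1)) (t_update m2 a (upd (m2 a) i2 v2)).
Proof.
  intros Hm Hl y Hy. unfold t_update in *.
  destruct (String.eqb_spec a y) as [E|E]; [subst y|auto].
  destruct (Hl Hy) as (Ha & <- & <-). now rewrite (Hm a Ha).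
Qed.

Scheme aexp_bexp_ind := Induction for aexp Sort Prop
  with bexp_aexp_ind := Induction for bexp Sort Prop.

Lemma eval_ext rho1 rho2 :
  (forall e, (forall x, In x (avars e) -> rho1 x = rho2 x) -> aeval rho1 e = aeval rho2 e) /\
  (forall be, (forall x, In x (bvars be) -> rho1 x = rho2 x) -> beval rho1 be = beval rho2 be).
Proof.
  set (Pa := fun e =>
    (forall x, In x (avars e) -> rho1 x = rho2 x) -> aeval rho1 e = aeval rho2 e).
  set (Pb := fun be =>
    (forall x, In x (bvars be) -> rho1 x = rho2 x) -> beval rho1 be = beval rho2 be).
  split; [apply (aexp_bexp_ind Pa Pb) | apply (bexp_aexp_ind Pa Pb)]; unfold Pa, Pb;
  simpl; intros;
  repeat match goal with
  | IH : (forall x, In x _ -> _) -> ?lhs = _ |- context [?lhs] =>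
      rewrite IH; clear IH;
      [| intros y Hy; match goal with H : forall x, In x _ -> _ |- _ => apply H end;
         rewrite ?in_app_iff; tauto]
  end; auto.
Qed.

Lemma aeval_pub_equiv P e rho1 rho2 :
  label_of_aexp P e = true -> pub_equiv P rho1 rho2 -> aeval rho1 e = aeval rho2 e.
Proof.
  unfold label_of_aexp; rewrite forallb_forall; intros. apply eval_ext; auto.
Qed.

Lemma beval_pub_equiv P be rho1 rho2 :
  label_of_bexp P be = true -> pub_equiv P rho1 rho2 -> beval rho1 be = beval rho2 be.
Proof.
  unfold label_of_bexp; rewrite forallb_forall; intros. apply eval_ext; auto.
Qed.

Lemma label_of_aexp_mono P Q e :
  pub_incl P Q -> label_of_aexp P e = true -> label_of_aexp Q e = true.
Proof. unfold label_of_aexp; rewrite !forallb_forall; auto. Qed.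

Lemma label_of_bexp_mono P Q be :
  pub_incl P Q -> label_of_bexp P be = true -> label_of_bexp Q be = true.
Proof. unfold label_of_bexp; rewrite !forallb_forall; auto. Qed.

(** * The flow-sensitive analysis *)

Fixpoint assigned_vars (c : com) : list string :=
  match c with
  | Asgn x _ | ARead x _ _ => [x]
  | Seq c1 c2 | If _ c1 c2 => assigned_vars c1 ++ assigned_vars c2
  | While _ c1 => assigned_vars c1
  | _ => []
  end.

Fixpoint assigned_arrs (c : com) : list string :=
  match c with
  | AWrite a _ _ => [a]
  | Seq c1 c2 | If _ c1 c2 => assigned_arrs c1 ++ assigned_arrs c2
  | While _ c1 => assigned_arrs c1
  | _ => []
  end.

Lemma assigned_count_spec c :
  assigned_count c = length (assigned_vars c) + length (assigned_arrs c).
Proof. induction c; simpl; rewrite ?length_app; lia. Qed.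

Definition pub_incl2 (x y : pub_vars * pub_arrs) : Prop :=
  pub_incl (fst x) (fst y) /\ pub_incl (snd x) (snd y).

Definition loop_step (c : com) (be : bexp) (pc : label) (P : pub_vars) (PA : pub_arrs)
    (st : pub_vars * pub_arrs) : pub_vars * pub_arrs :=
  let '(P'', PA'') := st in
  let '(_, P3, PA3) := static_tracking c P'' PA'' (join pc (label_of_bexp P'' be)) in
  (join_pub P3 P, join_pub PA3 PA).

Lemma static_tracking_While be c P PA pc :
  static_tracking (While be c) P PA pc =
  let '(Pf, PAf) := Nat.iter (assigned_count c) (loop_step c be pc P PA) (P, PA) in
  let '(ac, _, _) := static_tracking c Pf PAf (join pc (label_of_bexp Pf be)) in
  (AWhile (label_of_bexp Pf be) Pf PAf be ac, Pf, PAf).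
Proof. reflexivity. Qed.

Definition tracking_mono (c : com) : Prop :=
  forall P1 PA1 pc1 P2 PA2 pc2 ac1 P1' PA1' ac2 P2' PA2',
  pub_incl P1 P2 -> pub_incl PA1 PA2 -> (pc1 = true -> pc2 = true) ->
  static_tracking c P1 PA1 pc1 = (ac1, P1', PA1') ->
  static_tracking c P2 PA2 pc2 = (ac2, P2', PA2') ->
  pub_incl P1' P2' /\ pub_incl PA1' PA2'.

Lemma join_pc_mono pc1 pc2 P1 P2 be :
  (pc1 = true -> pc2 = true) -> pub_incl P1 P2 ->
  join pc1 (label_of_bexp P1 be) = true -> join pc2 (label_of_bexp P2 be) = true.
Proof.
  unfold join; intros Hpc HP H. apply andb_prop in H as [H1 H2].
  rewrite Hpc by auto. eapply label_of_bexp_mono; eauto.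
Qed.

Lemma loop_step_mono c be pc1 pc2 P1 P2 PA1 PA2 x1 x2 :
  tracking_mono c -> (pc1 = true -> pc2 = true) -> pub_incl P1 P2 -> pub_incl PA1 PA2 ->
  pub_incl2 x1 x2 ->
  pub_incl2 (loop_step c be pc1 P1 PA1 x1) (loop_step c be pc2 P2 PA2 x2).
Proof.
  intros Hc Hpc HP HPA. destruct x1 as [Q1 QA1], x2 as [Q2 QA2]; intros [HQ HQA].
  unfold loop_step; simpl in HQ, HQA.
  destruct (static_tracking c Q1 QA1 _) as [[a1 R1] RA1] eqn:E1.
  destruct (static_tracking c Q2 QA2 _) as [[a2 R2] RA2] eqn:E2.
  edestruct Hc as [HR HRA];
    [exact HQ | exact HQA | exact (join_pc_mono _ _ _ _ be Hpc HQ) | exact E1 | exact E2 |].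
  split; apply join_pub_mono; auto.
Qed.

Lemma static_tracking_mono c : tracking_mono c.
Proof.
  induction c; intros P1 PA1 pc1 P2 PA2 pc2 ac1 P1' PA1' ac2 P2' PA2' HP HPA Hpc E1 E2.
  - simpl in *. inversion E1; inversion E2; subst; auto.
  - simpl in *. inversion E1; inversion E2; subst. split; auto.
    apply pub_incl_update; eauto using label_of_aexp_mono.
  - simpl in E1, E2.
    destruct (static_tracking c1 P1 PA1 pc1) as [[a1 Q1] QA1] eqn:F1.
    destruct (static_tracking c1 P2 PA2 pc2) as [[a2 Q2] QA2] eqn:F2.
    destruct (static_tracking c2 Q1 QA1 pc1) as [[b1 R1] RA1] eqn:F3.
    destruct (static_tracking c2 Q2 QA2 pc2) as [[b2 R2] RA2] eqn:F4.
    inversion E1; inversion E2; subst.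
    edestruct IHc1 as [HQ HQA]; [exact HP | exact HPA | exact Hpc | exact F1 | exact F2 |].
    eapply IHc2; [exact HQ | exact HQA | exact Hpc | exact F3 | exact F4].
  - simpl in E1, E2.
    pose proof (join_pc_mono _ _ _ _ be Hpc HP) as Hpc'.
    destruct (static_tracking c1 P1 PA1 _) as [[a1 Q1] QA1] eqn:F1.
    destruct (static_tracking c2 P1 PA1 _) as [[b1 R1] RA1] eqn:F2.
    destruct (static_tracking c1 P2 PA2 _) as [[a2 Q2] QA2] eqn:F3.
    destruct (static_tracking c2 P2 PA2 _) as [[b2 R2] RA2] eqn:F4.
    inversion E1; inversion E2; subst.
    edestruct IHc1 as [HQ HQA]; [exact HP | exact HPA | exact Hpc' | exact F1 | exact F3 |].
    edestruct IHc2 as [HR HRA]; [exact HP | exact HPA | exact Hpc' | exact F2 | exact F4 |].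
    split; apply join_pub_mono; auto.
  - rewrite static_tracking_While in E1, E2.
    assert (Hit : forall n,
      pub_incl2 (Nat.iter n (loop_step c be pc1 P1 PA1) (P1, PA1))
                (Nat.iter n (loop_step c be pc2 P2 PA2) (P2, PA2))).
    { induction n; simpl; [split; auto | apply loop_step_mono; auto]. }
    specialize (Hit (assigned_count c)).
    destruct (Nat.iter _ (loop_step c be pc1 P1 PA1) _) as [Pf1 PAf1].
    destruct (Nat.iter _ (loop_step c be pc2 P2 PA2) _) as [Pf2 PAf2].
    destruct (static_tracking c Pf1 PAf1 _) as [[a1 Q1] QA1].
    destruct (static_tracking c Pf2 PAf2 _) as [[a2 Q2] QA2].
    inversion E1; inversion E2; subst. exact Hit.
  - simpl in *. inversion E1; inversion E2; subst. split; auto.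
    apply pub_incl_update; auto. unfold join. rewrite !andb_true_iff.
    intros (? & ? & ?). repeat split; eauto using label_of_aexp_mono.
  - simpl in *. inversion E1; inversion E2; subst. split; auto.
    apply pub_incl_update; auto. unfold join. rewrite !andb_true_iff.
    intros (? & ? & ? & ?). repeat split; eauto using label_of_aexp_mono.
Qed.

Definition tracking_frame (c : com) : Prop :=
  forall P PA pc ac P' PA', static_tracking c P PA pc = (ac, P', PA') ->
  (forall y, ~ In y (assigned_vars c) -> P' y = P y) /\
  (forall y, ~ In y (assigned_arrs c) -> PA' y = PA y).

Lemma loop_step_frame c be pc P PA x :
  tracking_frame c ->
  (forall y, ~ In y (assigned_vars c) -> fst (loop_step c be pc P PA x) y = fst x y && P y) /\
  (forall y, ~ In y (assigned_arrs c) -> snd (loop_step c be pc P PA x) y = snd x y && PA y).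
Proof.
  intros Hc. destruct x as [Q QA]. unfold loop_step.
  destruct (static_tracking c Q QA _) as [[ac R] RA] eqn:E.
  destruct (Hc _ _ _ _ _ _ E) as [Hv Ha].
  unfold join_pub, join; simpl. split; intros; [rewrite Hv | rewrite Ha]; auto.
Qed.

Lemma static_tracking_frame c : tracking_frame c.
Proof.
  induction c; intros P PA pc ac P' PA' E.
  - simpl in E. inversion E; subst; auto.
  - simpl in E. inversion E; subst; split; auto.
    intros y Hy. apply t_update_neq. simpl in Hy. tauto.
  - simpl in E. destruct (static_tracking c1 P PA pc) as [[a1 Q1] QA1] eqn:F1.
    destruct (static_tracking c2 Q1 QA1 pc) as [[b1 R1] RA1] eqn:F2.
    inversion E; subst. apply IHc1 in F1 as [A1 B1]. apply IHc2 in F2 as [A2 B2].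
    simpl. split; intros y; rewrite in_app_iff; intros;
      [rewrite A2, A1 | rewrite B2, B1]; tauto.
  - simpl in E. destruct (static_tracking c1 P PA _) as [[a1 Q1] QA1] eqn:F1.
    destruct (static_tracking c2 P PA _) as [[b1 R1] RA1] eqn:F2.
    inversion E; subst. apply IHc1 in F1 as [A1 B1]. apply IHc2 in F2 as [A2 B2].
    simpl. unfold join_pub, join. split; intros y; rewrite in_app_iff; intros;
      [rewrite A2, A1 | rewrite B2, B1]; try tauto; apply andb_diag.
  - rewrite static_tracking_While in E.
    assert (Hit : forall n,
      (forall y, ~ In y (assigned_vars c) ->
         fst (Nat.iter n (loop_step c be pc P PA) (P, PA)) y = P y) /\
      (forall y, ~ In y (assigned_arrs c) ->
         snd (Nat.iter n (loop_step c be pc P PA) (P, PA)) y = PA y)).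
    { induction n as [|n [IHv IHa]]; simpl; [auto|].
      destruct (loop_step_frame c be pc P PA (Nat.iter n (loop_step c be pc P PA) (P, PA)) IHc)
        as [Fv Fa].
      split; intros y Hy; [rewrite Fv, IHv | rewrite Fa, IHa]; auto; apply andb_diag. }
    specialize (Hit (assigned_count c)).
    destruct (Nat.iter _ (loop_step c be pc P PA) _) as [Pf PAf].
    destruct (static_tracking c Pf PAf _) as [[a1 Q1] QA1].
    inversion E; subst. exact Hit.
  - simpl in E. inversion E; subst; split; auto.
    intros y Hy. apply t_update_neq. simpl in Hy. tauto.
  - simpl in E. inversion E; subst; split; auto.
    intros y Hy. apply t_update_neq. simpl in Hy. tauto.
Qed.

Lemma filter_length_lt_or_ext (l : list string) (f g : string -> bool) :
  pub_incl g f ->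
  (forall z, In z l -> g z = f z) \/ length (filter g l) < length (filter f l).
Proof.
  intros Hgf. induction l as [|a l IH]; simpl; [left; tauto|].
  destruct (g a) eqn:Eg; [rewrite (Hgf a Eg) | destruct (f a) eqn:Ef]; simpl.
  - destruct IH as [IH|IH]; [left | right; lia].
    intros z [<-|Hz]; auto. now rewrite Eg, (Hgf a Eg).
  - right. pose proof (filter_length_le g l).
    destruct IH as [IH|IH]; [rewrite (filter_ext_in g f l IH) in *|]; lia.
  - destruct IH as [IH|IH]; [left | right; lia].
    intros z [<-|Hz]; auto. congruence.
Qed.

Lemma labeling_eq_split (L : list string) (g f f0 : total_map label) :
  (forall z, In z L -> g z = f z) -> pub_incl f f0 ->
  (forall z, ~ In z L -> g z = f z && f0 z) -> g = f.
Proof.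
  intros HL Hf0 Hout. apply functional_extensionality; intros z.
  destruct (in_dec string_dec z L) as [Hz|Hz]; auto.
  rewrite Hout by auto. destruct (f z) eqn:Ef; auto. now rewrite (Hf0 z Ef).
Qed.

Section LoopFixpoint.

Variable G : pub_vars * pub_arrs -> pub_vars * pub_arrs.
Variable x0 : pub_vars * pub_arrs.
Variables Lv La : list string.
Hypothesis G_mono : forall x y, pub_incl2 x y -> pub_incl2 (G x) (G y).
Hypothesis G_below : forall x, pub_incl2 (G x) x0.
Hypothesis G_frame_vars : forall x y, ~ In y Lv -> fst (G x) y = fst x y && fst x0 y.
Hypothesis G_frame_arrs : forall x y, ~ In y La -> snd (G x) y = snd x y && snd x0 y.

Definition potential (x : pub_vars * pub_arrs) : nat :=
  length (filter (fst x) Lv) + length (filter (snd x) La).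

Lemma iter_below n : pub_incl2 (Nat.iter n G x0) x0.
Proof.
  destruct n; simpl; [split; apply pub_incl_refl | apply G_below].
Qed.

Lemma iter_decr n : pub_incl2 (Nat.iter (S n) G x0) (Nat.iter n G x0).
Proof. induction n; [apply G_below | now apply G_mono]. Qed.

Lemma iter_stable_or_potential_decr n :
  Nat.iter (S n) G x0 = Nat.iter n G x0 \/
  potential (Nat.iter (S n) G x0) < potential (Nat.iter n G x0).
Proof.
  destruct (iter_decr n) as [Dv Da], (iter_below n) as [Bv Ba].
  change (Nat.iter (S n) G x0) with (G (Nat.iter n G x0)) in *.
  generalize dependent (Nat.iter n G x0); intros x Dv Da Bv Ba.
  unfold potential.
  destruct (filter_length_lt_or_ext Lv _ _ Dv) as [Ev|Ev];
  destruct (filter_length_lt_or_ext La _ _ Da) as [Ea|Ea];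
  rewrite ?(filter_ext_in _ _ _ Ev), ?(filter_ext_in _ _ _ Ea); try (right; lia).
  left. destruct (G x) as [Gv Ga] eqn:EG, x as [xv xa]. simpl in *.
  f_equal; eapply labeling_eq_split; eauto; intros z Hz.
  - pose proof (G_frame_vars (xv, xa) z Hz) as F. rewrite EG in F. exact F.
  - pose proof (G_frame_arrs (xv, xa) z Hz) as F. rewrite EG in F. exact F.
Qed.

Lemma iter_fixpoint :
  G (Nat.iter (length Lv + length La) G x0) = Nat.iter (length Lv + length La) G x0.
Proof.
  assert (H : forall n, Nat.iter (S n) G x0 = Nat.iter n G x0 \/
                        potential (Nat.iter (S n) G x0) + S n <= potential x0).
  { induction n as [|n [IH|IH]].
    - destruct (iter_stable_or_potential_decr 0); [left | right; simpl in *; lia]; auto.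
    - left. change (G (Nat.iter (S n) G x0) = Nat.iter (S n) G x0). simpl in IH |- *.
      now rewrite IH.
    - destruct (iter_stable_or_potential_decr (S n)); [left | right; lia]; auto. }
  destruct (H (length Lv + length La)) as [E|E]; [exact E|].
  exfalso. unfold potential in E.
  pose proof (filter_length_le (fst x0) Lv). pose proof (filter_length_le (snd x0) La). lia.
Qed.

End LoopFixpoint.

Lemma while_invariant {c be pc P PA Pf PAf} :
  Nat.iter (assigned_count c) (loop_step c be pc P PA) (P, PA) = (Pf, PAf) ->
  pub_incl Pf P /\ pub_incl PAf PA /\
  forall ac Q QA, static_tracking c Pf PAf (join pc (label_of_bexp Pf be)) = (ac, Q, QA) ->
    pub_incl Pf Q /\ pub_incl PAf QA.
Proof.
  intros Ei.
  set (G := loop_step c be pc P PA) in *.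
  assert (G_mono : forall x y, pub_incl2 x y -> pub_incl2 (G x) (G y)).
  { intros. apply loop_step_mono; auto using pub_incl_refl, static_tracking_mono. }
  assert (G_below : forall x, pub_incl2 (G x) (P, PA)).
  { intros [Q QA]. unfold G, loop_step.
    destruct (static_tracking c Q QA _) as [[? ?] ?]. split; apply join_pub_incl_r. }
  pose proof (fun x => loop_step_frame c be pc P PA x (static_tracking_frame c)) as Hfr.
  rewrite assigned_count_spec in Ei.
  pose proof (iter_below G (P, PA) G_below (length (assigned_vars c) + length (assigned_arrs c)))
    as [HP HPA].
  pose proof (iter_fixpoint G (P, PA) _ _ G_mono G_below
                (fun x => proj1 (Hfr x)) (fun x => proj2 (Hfr x))) as Hfix.
  rewrite Ei in HP, HPA, Hfix. split; [exact HP | split; [exact HPA |]].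
  intros ac Q QA E. unfold G, loop_step in Hfix. rewrite E in Hfix.
  injection Hfix as HQ HQA. rewrite <- HQ, <- HQA at 1.
  split; apply join_pub_incl_l.
Qed.

(** * Executions *)

Lemma seq_step_obs_length {s r1 m1 s1 r1' m1' o1 r2 m2 s2 r2' m2' o2} :
  seq_eval_small_step s r1 m1 s1 r1' m1' o1 ->
  seq_eval_small_step s r2 m2 s2 r2' m2' o2 -> length o1 = length o2.
Proof.
  intros Hs1; revert r2 m2 s2 r2' m2' o2.
  induction Hs1; intros r2 m2 s2 r2' m2' o2 Hs2; inversion Hs2; subst; simpl; eauto;
  match goal with H : seq_eval_small_step Skip _ _ _ _ _ _ |- _ => inversion H end.
Qed.

Lemma multi_seq_seq_l s1 s2 r m s1' r' m' os :
  multi_seq s1 r m s1' r' m' os -> multi_seq (Seq s1 s2) r m (Seq s1' s2) r' m' os.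
Proof. induction 1; econstructor; eauto using SSM_Seq. Qed.

Lemma seq_same_obs_seq_l s1 s2 r1 m1 r2 m2 :
  seq_same_obs (Seq s1 s2) r1 m1 (Seq s1 s2) r2 m2 -> seq_same_obs s1 r1 m1 s1 r2 m2.
Proof. unfold seq_same_obs; eauto using multi_seq_seq_l. Qed.

Lemma multi_seq_single {s r m s' r' m' os} :
  seq_eval_small_step s r m s' r' m' os -> multi_seq s r m s' r' m' os.
Proof. intros H. rewrite <- (app_nil_r os). econstructor; eauto using multi_seq_refl. Qed.

Lemma seq_same_obs_step_obs {s r1 m1 r2 m2 s1 r1' m1' o1 s2 r2' m2' o2} :
  seq_same_obs s r1 m1 s r2 m2 ->
  seq_eval_small_step s r1 m1 s1 r1' m1' o1 ->
  seq_eval_small_step s r2 m2 s2 r2' m2' o2 -> o1 = o2.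
Proof.
  intros Hs H1 H2. pose proof (seq_step_obs_length H1 H2) as L.
  destruct (Hs _ _ _ _ _ _ _ _ (multi_seq_single H1) (multi_seq_single H2)) as [[l ->]|[l ->]];
  rewrite length_app in L; destruct l; simpl in L; try lia; now rewrite app_nil_r.
Qed.

Lemma seq_same_obs_step s r1 m1 r2 m2 s' r1' m1' r2' m2' os :
  seq_same_obs s r1 m1 s r2 m2 ->
  seq_eval_small_step s r1 m1 s' r1' m1' os -> seq_eval_small_step s r2 m2 s' r2' m2' os ->
  seq_same_obs s' r1' m1' s' r2' m2'.
Proof.
  unfold seq_same_obs. intros Hs H1 H2 ? ? ? ? ? ? ? ? M1 M2.
  edestruct Hs as [[l E]|[l E]];
    [ econstructor; [exact H1 | exact M1] | econstructor; [exact H2 | exact M2] | left | right ];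
    exists l; rewrite <- app_assoc in E; eapply app_inv_head; eauto.
Qed.

Lemma spec_step_obs_length t r m b t' r' m' b' d o :
  spec_eval_small_step t r m b t' r' m' b' d o -> length o = length d.
Proof. induction 1; simpl; auto. Qed.

Lemma multi_spec_obs_length t r m b t' r' m' b' d o :
  multi_spec t r m b t' r' m' b' d o -> length o = length d.
Proof.
  induction 1; simpl; auto. apply spec_step_obs_length in H. rewrite !length_app. lia.
Qed.

Lemma spec_step_dirs_length t r1 m1 b1 t1 r1' m1' b1' d1 o1 r2 m2 b2 t2 r2' m2' b2' d2 o2 :
  spec_eval_small_step t r1 m1 b1 t1 r1' m1' b1' d1 o1 ->
  spec_eval_small_step t r2 m2 b2 t2 r2' m2' b2' d2 o2 -> length d1 = length d2.
Proof.
  intros Hs1; revert r2 m2 b2 t2 r2' m2' b2' d2 o2.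
  induction Hs1; intros r2 m2 b2 t2 r2' m2' b2' d2 o2 Hs2; inversion Hs2; subst; simpl; eauto;
  match goal with H : spec_eval_small_step Skip _ _ _ _ _ _ _ _ _ |- _ => inversion H end.
Qed.

Lemma app_inv_length {A} (l1 l2 l3 l4 : list A) :
  length l1 = length l2 -> l1 ++ l3 = l2 ++ l4 -> l1 = l2 /\ l3 = l4.
Proof.
  revert l2; induction l1 as [|x l1 IH]; intros [|y l2] L E; simpl in *; try discriminate; auto.
  injection E as -> E. destruct (IH l2 ltac:(lia) E) as [-> ->]. auto.
Qed.

Lemma spec_step_Asgn_inv x e rho mu bt c' rho' mu' bt' d o :
  spec_eval_small_step (Asgn x e) rho mu bt c' rho' mu' bt' d o ->
  c' = Skip /\ rho' = t_update rho x (aeval rho e) /\ mu' = mu /\ bt' = bt /\ d = [] /\ o = [].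
Proof. intros H. inversion H; subst; auto 10. Qed.

Lemma spec_step_If_inv be c1 c2 rho mu bt c' rho' mu' bt' d o :
  spec_eval_small_step (If be c1 c2) rho mu bt c' rho' mu' bt' d o ->
  rho' = rho /\ mu' = mu /\ o = [OBranch (beval rho be)] /\
  ((c' = (if beval rho be then c1 else c2) /\ bt' = bt /\ d = [DStep]) \/
   (c' = (if beval rho be then c2 else c1) /\ bt' = true /\ d = [DForce])).
Proof. intros H. inversion H; subst; auto 10. Qed.

Lemma spec_step_Seq_inv c1 c2 rho mu bt c' rho' mu' bt' d o :
  spec_eval_small_step (Seq c1 c2) rho mu bt c' rho' mu' bt' d o ->
  (exists c1', spec_eval_small_step c1 rho mu bt c1' rho' mu' bt' d o /\ c' = Seq c1' c2) \/
  (c1 = Skip /\ c' = c2 /\ rho' = rho /\ mu' = mu /\ bt' = bt /\ d = [] /\ o = []).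
Proof. intros H. inversion H; subst; eauto 10. Qed.

Lemma spec_step_While_inv be c rho mu bt c' rho' mu' bt' d o :
  spec_eval_small_step (While be c) rho mu bt c' rho' mu' bt' d o ->
  c' = If be (Seq c (While be c)) Skip /\ rho' = rho /\ mu' = mu /\ bt' = bt /\ d = [] /\ o = [].
Proof. intros H. inversion H; subst; auto 10. Qed.

Lemma spec_step_ARead_inv x a ie rho mu bt c' rho' mu' bt' d o :
  spec_eval_small_step (ARead x a ie) rho mu bt c' rho' mu' bt' d o ->
  mu' = mu /\ bt' = bt /\ c' = Skip /\ o = [ORead a (aeval rho ie)] /\
  ((d = [DStep] /\ aeval rho ie < length (mu a) /\
      rho' = t_update rho x (nth (aeval rho ie) (mu a) 0)) \/
   (exists a' j, d = [DLoad a' j] /\ bt = true /\ rho' = t_update rho x (nth j (mu a') 0))).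
Proof. intros H. inversion H; subst; eauto 15. Qed.

Lemma spec_step_AWrite_inv a ie e rho mu bt c' rho' mu' bt' d o :
  spec_eval_small_step (AWrite a ie e) rho mu bt c' rho' mu' bt' d o ->
  rho' = rho /\ bt' = bt /\ c' = Skip /\ o = [OWrite a (aeval rho ie)] /\
  ((d = [DStep] /\ aeval rho ie < length (mu a) /\
      mu' = t_update mu a (upd (mu a) (aeval rho ie) (aeval rho e))) \/
   (exists a' j, d = [DStore a' j] /\ bt = true)).
Proof. intros H. inversion H; subst; eauto 15. Qed.

(** * The simulation relation *)

Notation flag_then l be := (Asgn bvar (ACond (B_of l be) (AVar bvar) (ANum 1))).
Notation flag_else l be := (Asgn bvar (ACond (B_of l be) (ANum 1) (AVar bvar))).
Notation mask_var x := (Asgn x (ACond (bEq 1) (ANum 0) (AVar x))).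
Notation masked_index li i := (if li then i else mask_index i).

(* [Some (B, v)] for a flag update that keeps [b] exactly when [B] evaluates to [v]. *)
Definition flag_guard (e : aexp) : option (bexp * bool) :=
  match e with
  | ACond B (AVar _) (ANum 1) => Some (B, true)
  | ACond B (ANum 1) (AVar _) => Some (B, false)
  | _ => None
  end.

Fixpoint leading_guard (c : com) : option (bexp * bool) :=
  match c with
  | Seq Skip c2 => leading_guard c2
  | Seq c1 _ => leading_guard c1
  | Asgn x e => if String.eqb x bvar then flag_guard e else None
  | _ => None
  end.

Inductive is_flag_update : aexp -> Prop :=
  | flag_update_then B : is_flag_update (ACond B (AVar bvar) (ANum 1))
  | flag_update_else B : is_flag_update (ACond B (ANum 1) (AVar bvar)).

Definition guard_holds (t : com) (rho : state) : Prop :=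
  forall B v, leading_guard t = Some (B, v) -> beval rho B = v.

Definition guard_fails (t : com) (rho : state) : Prop :=
  exists B v, leading_guard t = Some (B, v) /\ beval rho B = negb v.

(* [sim bt P PA t s Q QA]: the residual target program [t] simulates the residual
   source program [s]; [P, PA] label the current states and [Q, QA] the final ones.
   Besides the translations of source commands, [t] may be a translated command
   partway through its execution: a pending flag update (after a branch),
   a pending mask (after a public read), or an unfolded loop.  Once misspeculation
   has started ([bt = true]) the mask makes its variable public, since [b = 1]. *)
Inductive sim (bt : bool) : pub_vars -> pub_arrs -> com -> com -> pub_vars -> pub_arrs -> Prop :=
  | sim_skip P PA Q QA :
      pub_incl Q P -> pub_incl QA PA -> sim bt P PA Skip Skip Q QA
  | sim_asgn P PA Q QA x e :
      x <> bvar -> pub_incl Q (t_update P x (label_of_aexp P e)) -> pub_incl QA PA ->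
      sim bt P PA (Asgn x e) (Asgn x e) Q QA
  | sim_seq P PA P1 PA1 Q QA t1 t2 s1 s2 :
      sim bt P PA t1 s1 P1 PA1 -> sim bt P1 PA1 t2 s2 Q QA -> leading_guard t2 = None ->
      sim bt P PA (Seq t1 t2) (Seq s1 s2) Q QA
  | sim_if P PA Q QA l be t1 t2 s1 s2 :
      (l = true -> label_of_bexp P be = true) ->
      sim bt P PA t1 s1 Q QA -> sim bt P PA t2 s2 Q QA ->
      leading_guard t1 = None -> leading_guard t2 = None ->
      sim bt P PA (If (B_of l be) (Seq (flag_then l be) t1) (Seq (flag_else l be) t2))
        (If be s1 s2) Q QA
  | sim_flag_seq P PA Q QA e t s :
      is_flag_update e -> sim bt P PA t s Q QA -> leading_guard t = None ->
      sim bt P PA (Seq (Asgn bvar e) t) s Q QA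
  | sim_skip_seq P PA Q QA t s :
      sim bt P PA t s Q QA -> sim bt P PA (Seq Skip t) s Q QA
  | sim_flag P PA Q QA e :
      is_flag_update e -> pub_incl Q P -> pub_incl QA PA ->
      sim bt P PA (Asgn bvar e) Skip Q QA
  | sim_read P PA Q QA x a i (li : label) :
      x <> bvar -> (li = true -> label_of_aexp P i = true) ->
      pub_incl Q (t_update P x false) -> pub_incl QA PA ->
      sim bt P PA (ARead x a (masked_index li i)) (ARead x a i) Q QA
  | sim_read_mask P PA Q QA x a i :
      x <> bvar -> label_of_aexp P i = true -> PA a = true ->
      pub_incl Q (t_update P x true) -> pub_incl QA PA ->
      sim bt P PA (Seq (ARead x a i) (mask_var x)) (ARead x a i) Q QA
  | sim_mask P PA Q QA x :
      x <> bvar -> pub_incl Q (t_update P x (bt || P x)) -> pub_incl QA PA ->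
      sim bt P PA (mask_var x) Skip Q QA
  | sim_write P PA Q QA a i e (li : label) :
      (li = true -> label_of_aexp P i = true) -> pub_incl Q P ->
      pub_incl QA (t_update PA a (PA a && (label_of_aexp P i && label_of_aexp P e))) ->
      sim bt P PA (AWrite a (masked_index li i) e) (AWrite a i e) Q QA
  | sim_while P PA I IA Q QA l be t c I3 IA3 :
      pub_incl I P -> pub_incl IA PA -> (l = true -> label_of_bexp I be = true) ->
      sim bt I IA t c I3 IA3 -> pub_incl I I3 -> pub_incl IA IA3 -> leading_guard t = None ->
      pub_incl Q I -> pub_incl QA IA ->
      sim bt P PA (Seq (While (B_of l be) (Seq (flag_then l be) t)) (flag_else l be))
        (While be c) Q QA
  | sim_while_unfolded P PA I IA Q QA l be t c I3 IA3 :
      pub_incl I P -> pub_incl IA PA -> (l = true -> label_of_bexp I be = true) ->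
      sim bt I IA t c I3 IA3 -> pub_incl I I3 -> pub_incl IA IA3 -> leading_guard t = None ->
      pub_incl Q I -> pub_incl QA IA ->
      sim bt P PA
        (Seq (If (B_of l be)
                 (Seq (Seq (flag_then l be) t) (While (B_of l be) (Seq (flag_then l be) t)))
                 Skip)
             (flag_else l be))
        (If be (Seq c (While be c)) Skip) Q QA
  | sim_while_body P PA P1 PA1 I IA Q QA l be t c I3 IA3 A s :
      sim bt P PA A s P1 PA1 -> pub_incl I P1 -> pub_incl IA PA1 ->
      (l = true -> label_of_bexp I be = true) ->
      sim bt I IA t c I3 IA3 -> pub_incl I I3 -> pub_incl IA IA3 -> leading_guard t = None ->
      pub_incl Q I -> pub_incl QA IA ->
      sim bt P PA (Seq (Seq A (While (B_of l be) (Seq (flag_then l be) t))) (flag_else l be))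
        (Seq s (While be c)) Q QA.

Lemma sim_weaken bt P PA t s Q QA Q' QA' :
  sim bt P PA t s Q QA -> pub_incl Q' Q -> pub_incl QA' QA -> sim bt P PA t s Q' QA'.
Proof.
  intros H; revert Q' QA'.
  induction H; intros Q' QA' HQ HQA;
    [ econstructor; eauto using pub_incl_trans ..
    | eapply sim_while_body; eauto using pub_incl_trans ].
Qed.

Lemma sim_spec bt P PA t s Q QA :
  sim false P PA t s Q QA -> sim bt P PA t s Q QA.
Proof.
  destruct bt; auto.
  induction 1; [econstructor; eauto .. | eapply sim_while_body; eauto].
  eapply pub_incl_trans; eauto. apply pub_incl_update; auto using pub_incl_refl.
Qed.

Lemma translation_sim_ARead P PA pc x a i
    (l := join pc (join (label_of_aexp P i) (PA a))) :
  x <> bvar ->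
  sim false P PA (fs_flex_slh (AARead x l (label_of_aexp P i) a i)) (ARead x a i)
    (t_update P x l) PA /\
  leading_guard (fs_flex_slh (AARead x l (label_of_aexp P i) a i)) = None.
Proof.
  intros Hx. subst l. simpl.
  destruct (label_of_aexp P i) eqn:Li; [destruct (join pc (join true (PA a))) eqn:Lx|].
  - unfold join in Lx. apply andb_prop in Lx as [_ Lx]. simpl in Lx.
    split; [apply sim_read_mask; auto using pub_incl_refl | reflexivity].
  - split; [apply (sim_read false _ _ _ _ x a i true); auto using pub_incl_refl | reflexivity].
  - unfold join at 1. rewrite andb_false_r.
    split; [apply (sim_read false _ _ _ _ x a i false); auto using pub_incl_refl | reflexivity].
    discriminate.
Qed.

Lemma translation_sim_AWrite P PA pc a i e
    (l := join (PA a) (join pc (join (label_of_aexp P i) (label_of_aexp P e)))) :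
  sim false P PA (fs_flex_slh (AAWrite a i (label_of_aexp P i) e)) (AWrite a i e)
    P (t_update PA a l) /\
  leading_guard (fs_flex_slh (AAWrite a i (label_of_aexp P i) e)) = None.
Proof.
  subst l. simpl.
  destruct (label_of_aexp P i) eqn:Li;
    [ split; [apply (sim_write false _ _ _ _ a i e true) | reflexivity]
    | split; [apply (sim_write false _ _ _ _ a i e false) | reflexivity] ];
    try apply pub_incl_refl; try (intros; congruence).
  all: apply pub_incl_update; [apply pub_incl_refl|].
  all: unfold join; rewrite Li, !andb_true_iff; tauto.
Qed.

Lemma translation_sim {c P PA pc ac P' PA'} :
  ~ In bvar (used_vars c) -> static_tracking c P PA pc = (ac, P', PA') ->
  sim false P PA (fs_flex_slh ac) c P' PA' /\ leading_guard (fs_flex_slh ac) = None.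
Proof.
  revert P PA pc ac P' PA'.
  induction c; intros P PA pc ac P' PA' Hb E; simpl in Hb; rewrite ?in_app_iff in Hb.
  - simpl in E; injection E as <- <- <-.
    split; [constructor; apply pub_incl_refl | reflexivity].
  - simpl in E; injection E as <- <- <-.
    assert (x <> bvar) by (intros ->; auto).
    split; [constructor; auto using pub_incl_refl |].
    simpl. now rewrite (proj2 (String.eqb_neq _ _) H).
  - simpl in E.
    destruct (static_tracking c1 P PA pc) as [[a1 Q1] QA1] eqn:F1.
    destruct (static_tracking c2 Q1 QA1 pc) as [[a2 Q2] QA2] eqn:F2.
    injection E as <- <- <-.
    destruct (IHc1 _ _ _ _ _ _ ltac:(tauto) F1), (IHc2 _ _ _ _ _ _ ltac:(tauto) F2).
    split; [econstructor; eauto |]. simpl. destruct (fs_flex_slh a1); auto.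
  - simpl in E.
    destruct (static_tracking c1 P PA _) as [[a1 Q1] QA1] eqn:F1.
    destruct (static_tracking c2 P PA _) as [[a2 Q2] QA2] eqn:F2.
    injection E as <- <- <-.
    destruct (IHc1 _ _ _ _ _ _ ltac:(tauto) F1), (IHc2 _ _ _ _ _ _ ltac:(tauto) F2).
    split; [| reflexivity]. simpl. apply sim_if; auto.
    + eapply sim_weaken; eauto using join_pub_incl_l.
    + eapply sim_weaken; eauto using join_pub_incl_r.
  - rewrite static_tracking_While in E.
    destruct (Nat.iter _ (loop_step c be pc P PA) _) as [Pf PAf] eqn:Ei.
    destruct (while_invariant Ei) as (HP & HPA & Hinv).
    destruct (static_tracking c Pf PAf _) as [[a1 Q1] QA1] eqn:F1.
    injection E as <- <- <-.
    destruct (Hinv a1 Q1 QA1 eq_refl), (IHc _ _ _ _ _ _ ltac:(tauto) F1).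
    split; [| reflexivity]. simpl. eapply sim_while; eauto using pub_incl_refl.
  - simpl in E; injection E as <- <- <-.
    apply translation_sim_ARead. intros ->; auto.
  - simpl in E; injection E as <- <- <-.
    apply translation_sim_AWrite.
Qed.

Lemma sim_spec_mono bt bt' P PA t s Q QA :
  (bt' = false -> bt = false) -> sim bt P PA t s Q QA -> sim bt' P PA t s Q QA.
Proof. destruct bt, bt'; auto using sim_spec. intros H; now discriminate H. Qed.

(** * Lockstep simulation *)

Lemma leading_guard_seq t1 t2 :
  leading_guard t2 = None -> leading_guard (Seq t1 t2) = leading_guard t1.
Proof. destruct t1; auto. Qed.

Lemma leading_guard_asgn x e : x <> bvar -> leading_guard (Asgn x e) = None.
Proof. intros H. simpl. now rewrite (proj2 (String.eqb_neq _ _) H). Qed.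

Lemma leading_guard_while_body A be c E :
  leading_guard (Seq (Seq A (While be c)) E) = leading_guard A.
Proof. destruct A; reflexivity. Qed.

Lemma guard_holds_none t rho : leading_guard t = None -> guard_holds t rho.
Proof. unfold guard_holds; congruence. Qed.

(* Once misspeculation has started, [b = 1] unless the forced branch has not yet
   executed its flag update, whose guard then fails. *)
Definition flag_inv (bt : bool) (t : com) (rho1 rho2 : state) : Prop :=
  if bt then rho1 bvar = 1 \/ (rho1 bvar = 0 /\ guard_fails t rho1 /\ guard_fails t rho2)
  else rho1 bvar = 0 /\ guard_holds t rho1 /\ guard_holds t rho2.

Lemma flag_inv_guard bt t t' rho1 rho2 :
  leading_guard t' = leading_guard t -> flag_inv bt t rho1 rho2 -> flag_inv bt t' rho1 rho2.
Proof.
  unfold flag_inv, guard_holds, guard_fails; intros E. rewrite E. auto.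
Qed.

Lemma flag_raised_no_guard t rho1 rho2 :
  leading_guard t = None -> flag_inv true t rho1 rho2 -> rho1 bvar = 1.
Proof. intros E [H|(_ & (B & v & H & _) & _)]; congruence. Qed.

Lemma flag_inv_no_guard t rho1 rho2 :
  leading_guard t = None -> rho1 bvar = 0 -> flag_inv false t rho1 rho2.
Proof. intros. repeat split; auto using guard_holds_none. Qed.

Lemma flag_inv_taken B X Y rho1 rho2 (v : bool) :
  leading_guard X = Some (B, true) -> leading_guard Y = Some (B, false) ->
  rho1 bvar = 0 -> beval rho1 B = v -> beval rho2 B = v ->
  flag_inv false (if v then X else Y) rho1 rho2.
Proof.
  unfold flag_inv, guard_holds; intros HX HY Hb H1 H2.
  destruct v; rewrite ?HX, ?HY; (split; [auto | split]); intros ? ? E; injection E as <- <-; auto.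
Qed.

Lemma flag_inv_forced B X Y rho1 rho2 (v : bool) :
  leading_guard X = Some (B, true) -> leading_guard Y = Some (B, false) ->
  rho1 bvar = 0 -> beval rho1 B = v -> beval rho2 B = v ->
  flag_inv true (if v then Y else X) rho1 rho2.
Proof.
  unfold flag_inv, guard_fails; intros HX HY Hb H1 H2. right.
  destruct v; (split; [auto | split]);
    [exists B, false .. | exists B, true | exists B, true]; rewrite ?HX, ?HY; auto.
Qed.

Lemma flag_update_value e :
  is_flag_update e -> exists B v, flag_guard e = Some (B, v) /\
    forall rho, aeval rho e = if Bool.eqb (beval rho B) v then rho bvar else 1.
Proof.
  intros He; inversion He; (eexists _, _; split; [reflexivity | intros rho]);
    simpl; destruct (beval rho B); reflexivity.
Qed.

Lemma flag_update_eval bt e t rho1 rho2 :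
  is_flag_update e -> leading_guard t = flag_guard e ->
  flag_inv bt t rho1 rho2 -> rho1 bvar = rho2 bvar ->
  aeval rho1 e = (if bt then 1 else 0) /\ aeval rho2 e = (if bt then 1 else 0).
Proof.
  intros He Ht Hf Hb. destruct (flag_update_value e He) as (B & v & Hg & Hval).
  rewrite !Hval. rewrite Hg in Ht. unfold flag_inv, guard_holds, guard_fails in Hf.
  rewrite Ht in Hf. destruct bt.
  - destruct Hf as [H1|(_ & (B1 & v1 & E1 & F1) & (B2 & v2 & E2 & F2))].
    + rewrite <- Hb, H1. split; destruct (Bool.eqb _ _); auto.
    + injection E1 as <- <-; injection E2 as <- <-.
      rewrite F1, F2. destruct v; auto.
  - destruct Hf as (H1 & G1 & G2).
    rewrite (G1 _ _ eq_refl), (G2 _ _ eq_refl), <- Hb, H1, eqb_reflx. auto.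
Qed.

Lemma B_of_unflagged rho l be : rho bvar = 0 -> beval rho (B_of l be) = beval rho be.
Proof. intros H. destruct l; simpl; rewrite ?H; auto. Qed.

Lemma masked_index_unflagged rho (li : label) i :
  rho bvar = 0 -> aeval rho (masked_index li i) = aeval rho i.
Proof. intros H. destruct li; simpl; rewrite ?H; auto. Qed.

Lemma B_of_flagged_pub_equiv P rho1 rho2 l be :
  pub_equiv P rho1 rho2 -> rho1 bvar = 1 -> rho2 bvar = 1 ->
  (l = true -> label_of_bexp P be = true) -> beval rho1 (B_of l be) = beval rho2 (B_of l be).
Proof.
  intros Hpe H1 H2 Hl. destruct l; simpl.
  - eapply beval_pub_equiv; eauto.
  - now rewrite H1, H2.
Qed.

Lemma masked_index_flagged_pub_equiv P rho1 rho2 (li : label) i :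
  pub_equiv P rho1 rho2 -> rho1 bvar = 1 -> rho2 bvar = 1 ->
  (li = true -> label_of_aexp P i = true) ->
  aeval rho1 (masked_index li i) = aeval rho2 (masked_index li i).
Proof.
  intros Hpe H1 H2 Hl. destruct li; simpl.
  - eapply aeval_pub_equiv; eauto.
  - now rewrite H1, H2.
Qed.

Definition sim_state (bt : bool) (P : pub_vars) (PA : pub_arrs) (t s : com)
    (rho1 : state) (mu1 : mem) (rho2 : state) (mu2 : mem) : Prop :=
  pub_equiv P rho1 rho2 /\ rho1 bvar = rho2 bvar /\ flag_inv bt t rho1 rho2 /\
  (bt = false -> pub_equiv PA mu1 mu2 /\ seq_same_obs s rho1 mu1 s rho2 mu2).

Definition source_follows (s : com) (rho1 : state) (mu1 : mem) (rho2 : state) (mu2 : mem)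
    (s' : com) (rho1' : state) (mu1' : mem) (rho2' : state) (mu2' : mem) : Prop :=
  (s' = s /\ rho1' = rho1 /\ mu1' = mu1 /\ rho2' = rho2 /\ mu2' = mu2) \/
  exists os, seq_eval_small_step s rho1 mu1 s' rho1' mu1' os /\
             seq_eval_small_step s rho2 mu2 s' rho2' mu2' os.

Definition sim_post (bt : bool) (Q : pub_vars) (QA : pub_arrs) (s : com)
    (rho1 : state) (mu1 : mem) (rho2 : state) (mu2 : mem)
    (t' : com) (bt' : bool) (rho1' : state) (mu1' : mem) (rho2' : state) (mu2' : mem) : Prop :=
  exists s' P' PA', sim bt' P' PA' t' s' Q QA /\
    pub_equiv P' rho1' rho2' /\ rho1' bvar = rho2' bvar /\ flag_inv bt' t' rho1' rho2' /\
    (bt' = false -> bt = false /\ pub_equiv PA' mu1' mu2' /\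
       source_follows s rho1 mu1 rho2 mu2 s' rho1' mu1' rho2' mu2').

Definition lockstep (bt : bool) (P : pub_vars) (PA : pub_arrs) (t s : com)
    (Q : pub_vars) (QA : pub_arrs) : Prop :=
  forall rho1 mu1 rho2 mu2 t1 rho1' mu1' bt1 t2 rho2' mu2' bt2 d o1 o2,
  sim_state bt P PA t s rho1 mu1 rho2 mu2 ->
  spec_eval_small_step t rho1 mu1 bt t1 rho1' mu1' bt1 d o1 ->
  spec_eval_small_step t rho2 mu2 bt t2 rho2' mu2' bt2 d o2 ->
  o1 = o2 /\ t1 = t2 /\ bt1 = bt2 /\
  sim_post bt Q QA s rho1 mu1 rho2 mu2 t1 bt1 rho1' mu1' rho2' mu2'.

Lemma sim_post_flagged bt Q QA s rho1 mu1 rho2 mu2 t' rho1' mu1' rho2' mu2' s' P' PA' :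
  sim true P' PA' t' s' Q QA -> pub_equiv P' rho1' rho2' ->
  rho1' bvar = 1 -> rho2' bvar = 1 ->
  sim_post bt Q QA s rho1 mu1 rho2 mu2 t' true rho1' mu1' rho2' mu2'.
Proof.
  intros. exists s', P', PA'.
  split; [auto | split; [auto | split; [congruence | split; [now left | discriminate]]]].
Qed.

Lemma sim_post_unflagged Q QA s rho1 mu1 rho2 mu2 t' rho1' mu1' rho2' mu2' s' P' PA' :
  sim false P' PA' t' s' Q QA -> pub_equiv P' rho1' rho2' ->
  rho1' bvar = 0 -> rho2' bvar = 0 -> guard_holds t' rho1' -> guard_holds t' rho2' ->
  pub_equiv PA' mu1' mu2' -> source_follows s rho1 mu1 rho2 mu2 s' rho1' mu1' rho2' mu2' ->
  sim_post false Q QA s rho1 mu1 rho2 mu2 t' false rho1' mu1' rho2' mu2'.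
Proof. intros. exists s', P', PA'. repeat split; auto. congruence. Qed.

Lemma lockstep_skip bt P PA Q QA : lockstep bt P PA Skip Skip Q QA.
Proof. intros ? ? ? ? ? ? ? ? ? ? ? ? ? ? ? _ S1. inversion S1. Qed.

Lemma lockstep_asgn bt P PA Q QA x e :
  x <> bvar -> pub_incl Q (t_update P x (label_of_aexp P e)) -> pub_incl QA PA ->
  lockstep bt P PA (Asgn x e) (Asgn x e) Q QA.
Proof.
  intros Hx HQ HQA rho1 mu1 rho2 mu2 ? ? ? ? ? ? ? ? d ? ? (Hpe & Hb & Hf & Hseq) S1 S2.
  apply spec_step_Asgn_inv in S1 as (-> & -> & -> & -> & -> & ->).
  apply spec_step_Asgn_inv in S2 as (-> & -> & -> & -> & _ & ->).
  do 3 (split; [reflexivity |]).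
  assert (Hpe' : pub_equiv (t_update P x (label_of_aexp P e))
                   (t_update rho1 x (aeval rho1 e)) (t_update rho2 x (aeval rho2 e))).
  { eapply pub_equiv_update; eauto using pub_incl_refl, aeval_pub_equiv. }
  assert (HR : sim bt (t_update P x (label_of_aexp P e)) PA Skip Skip Q QA) by now constructor.
  destruct bt.
  - apply flag_raised_no_guard in Hf; [| now apply leading_guard_asgn].
    eapply sim_post_flagged; eauto; rewrite t_update_neq; congruence.
  - destruct Hf as (Hb0 & _), (Hseq eq_refl) as [Hpa _].
    eapply sim_post_unflagged; eauto using guard_holds_none; try (rewrite t_update_neq; congruence).
    right. exists []. split; constructor.
Qed.

Lemma source_follows_seq s1 s2 rho1 mu1 rho2 mu2 s1' rho1' mu1' rho2' mu2' :
  source_follows s1 rho1 mu1 rho2 mu2 s1' rho1' mu1' rho2' mu2' ->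
  source_follows (Seq s1 s2) rho1 mu1 rho2 mu2 (Seq s1' s2) rho1' mu1' rho2' mu2'.
Proof.
  intros [(-> & -> & -> & -> & ->)|(os & H1 & H2)]; [left | right]; auto.
  exists os. split; constructor; auto.
Qed.

Lemma sim_state_seq_l {bt P PA t1 t2 s1 s2 rho1 mu1 rho2 mu2} :
  leading_guard t2 = None ->
  sim_state bt P PA (Seq t1 t2) (Seq s1 s2) rho1 mu1 rho2 mu2 ->
  sim_state bt P PA t1 s1 rho1 mu1 rho2 mu2.
Proof.
  intros Ht2 (Hpe & Hb & Hf & Hseq). repeat split; auto.
  - eapply flag_inv_guard; [| exact Hf]. symmetry. now apply leading_guard_seq.
  - apply Hseq; auto.
  - eapply seq_same_obs_seq_l, Hseq; auto.
Qed.

Lemma sim_post_seq_l bt bt' P1 PA1 Q QA t1' t2 s1 s2 rho1 mu1 rho2 mu2 rho1' mu1' rho2' mu2' :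
  sim bt P1 PA1 t2 s2 Q QA -> leading_guard t2 = None ->
  sim_post bt P1 PA1 s1 rho1 mu1 rho2 mu2 t1' bt' rho1' mu1' rho2' mu2' ->
  sim_post bt Q QA (Seq s1 s2) rho1 mu1 rho2 mu2 (Seq t1' t2) bt' rho1' mu1' rho2' mu2'.
Proof.
  intros HR2 Ht2 (s1' & P' & PA' & HR & Hpe & Hb & Hf & Hseq).
  exists (Seq s1' s2), P', PA'. split; [| split; [| split; [| split]]]; auto.
  - econstructor; eauto. apply (sim_spec_mono bt); auto. intros E; apply Hseq, E.
  - eapply flag_inv_guard; [| exact Hf]. now apply leading_guard_seq.
  - intros E. destruct (Hseq E) as (? & ? & ?). auto using source_follows_seq.
Qed.

Lemma lockstep_seq bt P PA P1 PA1 Q QA t1 t2 s1 s2 :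
  sim bt P PA t1 s1 P1 PA1 -> lockstep bt P PA t1 s1 P1 PA1 ->
  sim bt P1 PA1 t2 s2 Q QA -> leading_guard t2 = None ->
  lockstep bt P PA (Seq t1 t2) (Seq s1 s2) Q QA.
Proof.
  intros HR1 IH1 HR2 Ht2 rho1 mu1 rho2 mu2 ? ? ? ? ? ? ? ? d ? ? Hst S1 S2.
  apply spec_step_Seq_inv in S1 as [(t1' & S1 & ->)|(-> & -> & -> & -> & -> & -> & ->)].
  - apply spec_step_Seq_inv in S2 as [(t2' & S2 & ->)|(-> & _)]; [| inversion S1].
    edestruct IH1 as (Eo & Et & Ebt & Hpost);
      [exact (sim_state_seq_l Ht2 Hst) | exact S1 | exact S2 | subst].
    do 3 (split; [reflexivity |]). eapply sim_post_seq_l; eauto.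
  - apply spec_step_Seq_inv in S2 as [(? & S2 & _)|(_ & -> & -> & -> & -> & _ & ->)];
      [inversion S2 |].
    do 3 (split; [reflexivity |]).
    inversion HR1; subst. destruct Hst as (Hpe & Hb & Hf & Hseq).
    exists s2, P1, PA1. repeat split; eauto using pub_equiv_incl.
    + eapply pub_equiv_incl, Hseq; eauto.
    + right. exists []. split; constructor.
Qed.

Lemma lockstep_branch bt P PA P1 PA1 P2 PA2 Q QA l be X Y s1 s2 :
  (l = true -> label_of_bexp P be = true) ->
  leading_guard X = Some (B_of l be, true) -> leading_guard Y = Some (B_of l be, false) ->
  pub_incl P1 P -> pub_incl PA1 PA -> pub_incl P2 P -> pub_incl PA2 PA ->
  sim bt P1 PA1 X s1 Q QA -> sim bt P2 PA2 Y s2 Q QA ->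
  lockstep bt P PA (If (B_of l be) X Y) (If be s1 s2) Q QA.
Proof.
  intros Hl HX HY HP1 HPA1 HP2 HPA2 HR1 HR2 rho1 mu1 rho2 mu2 ? ? ? ? ? ? ? ? d ? ?
    (Hpe & Hb & Hf & Hseq) S1 S2.
  apply spec_step_If_inv in S1 as (-> & -> & -> & S1).
  apply spec_step_If_inv in S2 as (-> & -> & -> & S2).
  destruct bt.
  - apply flag_raised_no_guard in Hf; [| reflexivity].
    rewrite <- (B_of_flagged_pub_equiv P rho1 rho2 l be) in S2 |- * by (auto; congruence).
    destruct S1 as [(-> & -> & ->)|(-> & -> & ->)], S2 as [(-> & -> & Hd)|(-> & -> & Hd)];
      try discriminate; do 3 (split; [reflexivity |]);
      destruct (beval rho1 (B_of l be));
      (eapply sim_post_flagged; [eassumption | eauto using pub_equiv_incl | congruence ..]).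
  - destruct Hf as (Hb0 & _), (Hseq eq_refl) as [Hpa Hsame].
    assert (Hbe : beval rho1 be = beval rho2 be).
    { pose proof (seq_same_obs_step_obs Hsame
        (SSM_If be s1 s2 rho1 mu1) (SSM_If be s1 s2 rho2 mu2)). congruence. }
    assert (Hv1 : beval rho1 (B_of l be) = beval rho1 be) by now apply B_of_unflagged.
    assert (Hv2 : beval rho2 (B_of l be) = beval rho1 be)
      by (rewrite Hbe; apply B_of_unflagged; congruence).
    rewrite Hv1 in S1 |- *. rewrite Hv2 in S2 |- *.
    destruct S1 as [(-> & -> & ->)|(-> & -> & ->)], S2 as [(-> & -> & Hd)|(-> & -> & Hd)];
      try discriminate; do 3 (split; [reflexivity |]).
    + exists (if beval rho1 be then s1 else s2),
        (if beval rho1 be then P1 else P2), (if beval rho1 be then PA1 else PA2).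
      split; [destruct (beval rho1 be); auto |].
      split; [destruct (beval rho1 be); eauto using pub_equiv_incl |].
      split; [auto | split; [eapply flag_inv_taken; eauto |]].
      intros _. split; [auto | split; [destruct (beval rho1 be); eauto using pub_equiv_incl |]].
      right. exists [OBranch (beval rho1 be)].
      pose proof (SSM_If be s1 s2 rho2 mu2) as S2. rewrite <- Hbe in S2.
      split; [apply SSM_If | exact S2].
    + exists (if beval rho1 be then s2 else s1),
        (if beval rho1 be then P2 else P1), (if beval rho1 be then PA2 else PA1).
      split; [destruct (beval rho1 be); auto using sim_spec |].
      split; [destruct (beval rho1 be); eauto using pub_equiv_incl |].
      split; [auto | split; [eapply flag_inv_forced; eauto | discriminate]].
Qed.

Lemma lockstep_if bt P PA Q QA l be t1 t2 s1 s2 :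
  (l = true -> label_of_bexp P be = true) ->
  sim bt P PA t1 s1 Q QA -> sim bt P PA t2 s2 Q QA ->
  leading_guard t1 = None -> leading_guard t2 = None ->
  lockstep bt P PA (If (B_of l be) (Seq (flag_then l be) t1) (Seq (flag_else l be) t2))
    (If be s1 s2) Q QA.
Proof.
  intros Hl HR1 HR2 Ht1 Ht2.
  apply lockstep_branch with P PA P PA; auto using pub_incl_refl;
    apply sim_flag_seq; auto; constructor.
Qed.

Lemma lockstep_flag_seq bt P PA Q QA e t s :
  is_flag_update e -> sim bt P PA t s Q QA -> leading_guard t = None ->
  lockstep bt P PA (Seq (Asgn bvar e) t) s Q QA.
Proof.
  intros He HR Ht rho1 mu1 rho2 mu2 ? ? ? ? ? ? ? ? d ? ? (Hpe & Hb & Hf & Hseq) S1 S2.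
  apply spec_step_Seq_inv in S1 as [(? & S1 & ->)|(? & _)]; [| discriminate].
  apply spec_step_Asgn_inv in S1 as (-> & -> & -> & -> & -> & ->).
  apply spec_step_Seq_inv in S2 as [(? & S2 & ->)|(? & _)]; [| discriminate].
  apply spec_step_Asgn_inv in S2 as (-> & -> & -> & -> & _ & ->).
  do 3 (split; [reflexivity |]).
  destruct (flag_update_eval bt e (Seq (Asgn bvar e) t) rho1 rho2 He eq_refl Hf Hb) as [-> ->].
  destruct bt.
  - eapply sim_post_flagged; [apply sim_skip_seq, HR | apply pub_equiv_update_same, Hpe
                             | apply t_update_eq | apply t_update_eq].
  - destruct Hf as (Hb0 & _), (Hseq eq_refl) as [Hpa _].
    rewrite !t_update_same by congruence.
    eapply sim_post_unflagged; eauto using sim_skip_seq, guard_holds_none; [congruence|].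
    left. auto.
Qed.

Lemma lockstep_flag bt P PA Q QA e :
  is_flag_update e -> pub_incl Q P -> pub_incl QA PA ->
  lockstep bt P PA (Asgn bvar e) Skip Q QA.
Proof.
  intros He HQ HQA rho1 mu1 rho2 mu2 ? ? ? ? ? ? ? ? d ? ? (Hpe & Hb & Hf & Hseq) S1 S2.
  apply spec_step_Asgn_inv in S1 as (-> & -> & -> & -> & -> & ->).
  apply spec_step_Asgn_inv in S2 as (-> & -> & -> & -> & _ & ->).
  do 3 (split; [reflexivity |]).
  destruct (flag_update_eval bt e (Asgn bvar e) rho1 rho2 He eq_refl Hf Hb) as [-> ->].
  destruct bt.
  - apply sim_post_flagged with (s' := Skip) (P' := P) (PA' := PA);
      [now apply sim_skip | apply pub_equiv_update_same, Hpe
                             | apply t_update_eq | apply t_update_eq].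
  - destruct Hf as (Hb0 & _), (Hseq eq_refl) as [Hpa _].
    rewrite !t_update_same by congruence.
    eapply sim_post_unflagged; eauto using sim_skip, guard_holds_none; [congruence|].
    left. auto.
Qed.

Lemma lockstep_skip_seq bt P PA Q QA t s :
  sim bt P PA t s Q QA -> lockstep bt P PA (Seq Skip t) s Q QA.
Proof.
  intros HR rho1 mu1 rho2 mu2 ? ? ? ? ? ? ? ? d ? ? (Hpe & Hb & Hf & Hseq) S1 S2.
  apply spec_step_Seq_inv in S1 as [(? & S1 & _)|(_ & -> & -> & -> & -> & -> & ->)];
    [inversion S1 |].
  apply spec_step_Seq_inv in S2 as [(? & S2 & _)|(_ & -> & -> & -> & -> & _ & ->)];
    [inversion S2 |].
  do 3 (split; [reflexivity |]).
  exists s, P, PA. repeat split; auto; try apply Hseq; auto. left. auto.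
Qed.

Lemma lockstep_read bt P PA Q QA x a i (li : label) :
  x <> bvar -> (li = true -> label_of_aexp P i = true) ->
  pub_incl Q (t_update P x false) -> pub_incl QA PA ->
  lockstep bt P PA (ARead x a (masked_index li i)) (ARead x a i) Q QA.
Proof.
  intros Hx Hli HQ HQA rho1 mu1 rho2 mu2 ? ? ? ? ? ? ? ? d ? ? (Hpe & Hb & Hf & Hseq) S1 S2.
  apply spec_step_ARead_inv in S1 as (-> & -> & -> & -> & S1).
  apply spec_step_ARead_inv in S2 as (-> & -> & -> & -> & S2).
  assert (HR : sim bt (t_update P x false) PA Skip Skip Q QA) by now constructor.
  assert (Hpe' : forall v1 v2, pub_equiv (t_update P x false)
                                 (t_update rho1 x v1) (t_update rho2 x v2)).
  { intros. eapply pub_equiv_update; eauto using pub_incl_refl. discriminate. }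
  destruct bt.
  - apply flag_raised_no_guard in Hf; [| reflexivity].
    rewrite (masked_index_flagged_pub_equiv P rho1 rho2 li i) by (auto; congruence).
    do 2 (split; [reflexivity |]).
    destruct S1 as [(-> & _ & ->)|(? & ? & -> & _ & ->)],
      S2 as [(Hd & _ & ->)|(? & ? & Hd & _ & ->)];
      try discriminate; (split; [reflexivity |]);
      (eapply sim_post_flagged; [exact HR | apply Hpe' | ..]); rewrite t_update_neq; congruence.
  - destruct Hf as (Hb0 & _), (Hseq eq_refl) as [Hpa Hsame].
    destruct S1 as [(-> & L1 & ->)|(? & ? & _ & E & _)], S2 as [(_ & L2 & ->)|(? & ? & _ & E' & _)];
      try discriminate.
    rewrite (masked_index_unflagged rho1), (masked_index_unflagged rho2) in * by congruence.
    assert (Hi : aeval rho1 i = aeval rho2 i).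
    { pose proof (seq_same_obs_step_obs Hsame
        (SSM_ARead x a i rho1 mu1 _ eq_refl L1) (SSM_ARead x a i rho2 mu2 _ eq_refl L2)).
      congruence. }
    rewrite Hi. do 3 (split; [reflexivity |]).
    eapply sim_post_unflagged; eauto using guard_holds_none; try (rewrite t_update_neq; congruence).
    right. exists [ORead a (aeval rho2 i)].
    split; constructor; congruence.
Qed.

Lemma lockstep_read_mask bt P PA Q QA x a i :
  x <> bvar -> label_of_aexp P i = true -> PA a = true ->
  pub_incl Q (t_update P x true) -> pub_incl QA PA ->
  lockstep bt P PA (Seq (ARead x a i) (mask_var x)) (ARead x a i) Q QA.
Proof.
  intros Hx Hi Ha HQ HQA rho1 mu1 rho2 mu2 ? ? ? ? ? ? ? ? d ? ? (Hpe & Hb & Hf & Hseq) S1 S2.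
  apply spec_step_Seq_inv in S1 as [(? & S1 & ->)|(? & _)]; [| discriminate].
  apply spec_step_ARead_inv in S1 as (-> & -> & -> & -> & S1).
  apply spec_step_Seq_inv in S2 as [(? & S2 & ->)|(? & _)]; [| discriminate].
  apply spec_step_ARead_inv in S2 as (-> & -> & -> & -> & S2).
  rewrite (aeval_pub_equiv P i rho1 rho2) by auto.
  do 2 (split; [reflexivity |]).
  destruct bt.
  - apply flag_raised_no_guard in Hf; [| reflexivity].
    assert (HR : sim true (t_update P x false) PA (Seq Skip (mask_var x)) Skip Q QA).
    { apply sim_skip_seq, sim_mask; auto. now rewrite t_update_shadow. }
    assert (Hpe' : forall v1 v2, pub_equiv (t_update P x false)
                                   (t_update rho1 x v1) (t_update rho2 x v2)).
    { intros. eapply pub_equiv_update; eauto using pub_incl_refl. discriminate. }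
    destruct S1 as [(-> & _ & ->)|(? & ? & -> & _ & ->)],
      S2 as [(Hd & _ & ->)|(? & ? & Hd & _ & ->)];
      try discriminate; (split; [reflexivity |]);
      (eapply sim_post_flagged; [exact HR | apply Hpe' | ..]); rewrite t_update_neq; congruence.
  - destruct Hf as (Hb0 & _), (Hseq eq_refl) as [Hpa _].
    destruct S1 as [(-> & L1 & ->)|(? & ? & _ & E & _)], S2 as [(_ & L2 & ->)|(? & ? & _ & E' & _)];
      try discriminate.
    split; [reflexivity |].
    assert (Hi' : aeval rho1 i = aeval rho2 i) by eauto using aeval_pub_equiv.
    eapply sim_post_unflagged with (P' := t_update P x true); eauto.
    + apply sim_skip_seq, sim_mask; auto. now rewrite t_update_eq, t_update_shadow.
    + eapply pub_equiv_update; [exact Hpe | apply pub_incl_refl |].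
      now rewrite Hi', (Hpa a Ha).
    + rewrite t_update_neq; congruence.
    + rewrite t_update_neq; congruence.
    + apply guard_holds_none. now apply leading_guard_asgn.
    + apply guard_holds_none. now apply leading_guard_asgn.
    + right. exists [ORead a (aeval rho1 i)].
      split; [| rewrite Hi']; constructor; congruence.
Qed.

Lemma lockstep_mask bt P PA Q QA x :
  x <> bvar -> pub_incl Q (t_update P x (bt || P x)) -> pub_incl QA PA ->
  lockstep bt P PA (mask_var x) Skip Q QA.
Proof.
  intros Hx HQ HQA rho1 mu1 rho2 mu2 ? ? ? ? ? ? ? ? d ? ? (Hpe & Hb & Hf & Hseq) S1 S2.
  apply spec_step_Asgn_inv in S1 as (-> & -> & -> & -> & -> & ->).
  apply spec_step_Asgn_inv in S2 as (-> & -> & -> & -> & _ & ->).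
  do 3 (split; [reflexivity |]). simpl.
  destruct bt.
  - apply flag_raised_no_guard in Hf; [| now apply leading_guard_asgn].
    rewrite Hf, <- Hb, Hf. simpl.
    apply sim_post_flagged with (s' := Skip) (P' := t_update P x true) (PA' := PA).
    + now apply sim_skip.
    + now apply pub_equiv_update with (P := P) (l := true).
    + rewrite t_update_neq; congruence.
    + rewrite t_update_neq; congruence.
  - destruct Hf as (Hb0 & _), (Hseq eq_refl) as [Hpa _].
    rewrite Hb0, <- Hb, Hb0. simpl. rewrite !t_update_same by reflexivity.
    simpl in HQ. rewrite t_update_same in HQ by reflexivity.
    eapply sim_post_unflagged; eauto using guard_holds_none.
    + now apply sim_skip.
    + congruence.
    + left. auto.
Qed.

Lemma lockstep_write bt P PA Q QA a i e (li : label) :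
  (li = true -> label_of_aexp P i = true) -> pub_incl Q P ->
  pub_incl QA (t_update PA a (PA a && (label_of_aexp P i && label_of_aexp P e))) ->
  lockstep bt P PA (AWrite a (masked_index li i) e) (AWrite a i e) Q QA.
Proof.
  intros Hli HQ HQA rho1 mu1 rho2 mu2 ? ? ? ? ? ? ? ? d ? ? (Hpe & Hb & Hf & Hseq) S1 S2.
  apply spec_step_AWrite_inv in S1 as (-> & -> & -> & -> & S1).
  apply spec_step_AWrite_inv in S2 as (-> & -> & -> & -> & S2).
  set (PA' := t_update PA a (PA a && (label_of_aexp P i && label_of_aexp P e))) in *.
  assert (HR : sim bt P PA' Skip Skip Q QA) by now constructor.
  destruct bt.
  - apply flag_raised_no_guard in Hf; [| reflexivity].
    rewrite (masked_index_flagged_pub_equiv P rho1 rho2 li i) by (auto; congruence).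
    do 3 (split; [reflexivity |]).
    eapply sim_post_flagged; eauto; congruence.
  - destruct Hf as (Hb0 & _), (Hseq eq_refl) as [Hpa Hsame].
    destruct S1 as [(-> & L1 & ->)|(? & ? & _ & E)], S2 as [(_ & L2 & ->)|(? & ? & _ & E')];
      try discriminate.
    rewrite (masked_index_unflagged rho1), (masked_index_unflagged rho2) in * by congruence.
    assert (Hi : aeval rho1 i = aeval rho2 i).
    { pose proof (seq_same_obs_step_obs Hsame
        (SSM_AWrite a i e rho1 mu1 _ _ eq_refl eq_refl L1)
        (SSM_AWrite a i e rho2 mu2 _ _ eq_refl eq_refl L2)).
      congruence. }
    rewrite Hi. do 3 (split; [reflexivity |]).
    eapply sim_post_unflagged with (P' := P) (PA' := PA'); eauto using guard_holds_none.
    + congruence.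
    + apply pub_equiv_write; auto. rewrite !andb_true_iff.
      intros (Ha & _ & He). eauto using aeval_pub_equiv.
    + right. exists [OWrite a (aeval rho2 i)].
      split; econstructor; eauto. congruence.
Qed.

Lemma lockstep_while bt P PA I IA Q QA l be t c I3 IA3 :
  pub_incl I P -> pub_incl IA PA -> (l = true -> label_of_bexp I be = true) ->
  sim bt I IA t c I3 IA3 -> pub_incl I I3 -> pub_incl IA IA3 -> leading_guard t = None ->
  pub_incl Q I -> pub_incl QA IA ->
  lockstep bt P PA (Seq (While (B_of l be) (Seq (flag_then l be) t)) (flag_else l be))
    (While be c) Q QA.
Proof.
  intros HI HIA Hl HR HI3 HIA3 Ht HQ HQA rho1 mu1 rho2 mu2 ? ? ? ? ? ? ? ? d ? ?
    (Hpe & Hb & Hf & Hseq) S1 S2.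
  apply spec_step_Seq_inv in S1 as [(? & S1 & ->)|(? & _)]; [| discriminate].
  apply spec_step_While_inv in S1 as (-> & -> & -> & -> & -> & ->).
  apply spec_step_Seq_inv in S2 as [(? & S2 & ->)|(? & _)]; [| discriminate].
  apply spec_step_While_inv in S2 as (-> & -> & -> & -> & _ & ->).
  do 3 (split; [reflexivity |]).
  exists (If be (Seq c (While be c)) Skip), P, PA.
  split; [eapply sim_while_unfolded; eauto |].
  split; [auto | split; [auto | split]].
  - destruct bt.
    + left. eapply flag_raised_no_guard; [| exact Hf]. reflexivity.
    + apply flag_inv_no_guard; [reflexivity | apply Hf].
  - intros ->. destruct (Hseq eq_refl). repeat split; auto.
    right. exists []. split; constructor.
Qed.

Lemma spec_step_Seq_If B X Y E rho mu bt t' rho' mu' bt' d o :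
  spec_eval_small_step (Seq (If B X Y) E) rho mu bt t' rho' mu' bt' d o ->
  spec_eval_small_step (If B (Seq X E) (Seq Y E)) rho mu bt t' rho' mu' bt' d o.
Proof.
  intros S. apply spec_step_Seq_inv in S as [(? & S & ->)|(? & _)]; [| discriminate].
  assert (Hdistr : forall (v : bool) X' Y',
            Seq (if v then X' else Y') E = if v then Seq X' E else Seq Y' E)
    by (intros []; reflexivity).
  apply spec_step_If_inv in S as (-> & -> & -> & [(-> & -> & ->)|(-> & -> & ->)]);
    rewrite Hdistr; constructor.
Qed.

Lemma lockstep_Seq_If bt P PA Q QA B X Y E s :
  lockstep bt P PA (If B (Seq X E) (Seq Y E)) s Q QA ->
  lockstep bt P PA (Seq (If B X Y) E) s Q QA.
Proof.
  intros H ? ? ? ? ? ? ? ? ? ? ? ? ? ? ? Hst S1 S2.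
  eapply H; [exact Hst | apply spec_step_Seq_If, S1 | apply spec_step_Seq_If, S2].
Qed.

Lemma lockstep_while_unfolded bt P PA I IA Q QA l be t c I3 IA3 :
  pub_incl I P -> pub_incl IA PA -> (l = true -> label_of_bexp I be = true) ->
  sim bt I IA t c I3 IA3 -> pub_incl I I3 -> pub_incl IA IA3 -> leading_guard t = None ->
  pub_incl Q I -> pub_incl QA IA ->
  lockstep bt P PA
    (Seq (If (B_of l be)
             (Seq (Seq (flag_then l be) t) (While (B_of l be) (Seq (flag_then l be) t)))
             Skip)
         (flag_else l be))
    (If be (Seq c (While be c)) Skip) Q QA.
Proof.
  intros HI HIA Hl HR HI3 HIA3 Ht HQ HQA.
  apply lockstep_Seq_If, lockstep_branch with I IA P PA;
    eauto using label_of_bexp_mono, pub_incl_refl.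
  - eapply sim_while_body with (P1 := I3) (PA1 := IA3); eauto.
    apply sim_flag_seq; auto; constructor.
  - apply sim_skip_seq, sim_flag; eauto using pub_incl_trans; constructor.
Qed.

Lemma lockstep_while_body bt P PA P1 PA1 I IA Q QA l be t c I3 IA3 A s :
  sim bt P PA A s P1 PA1 -> lockstep bt P PA A s P1 PA1 ->
  pub_incl I P1 -> pub_incl IA PA1 -> (l = true -> label_of_bexp I be = true) ->
  sim bt I IA t c I3 IA3 -> pub_incl I I3 -> pub_incl IA IA3 -> leading_guard t = None ->
  pub_incl Q I -> pub_incl QA IA ->
  lockstep bt P PA (Seq (Seq A (While (B_of l be) (Seq (flag_then l be) t))) (flag_else l be))
    (Seq s (While be c)) Q QA.
Proof.
  intros HRA IHA HI HIA Hl HR HI3 HIA3 Ht HQ HQA rho1 mu1 rho2 mu2 ? ? ? ? ? ? ? ? d ? ?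
    Hst S1 S2.
  set (W := While (B_of l be) (Seq (flag_then l be) t)) in *.
  apply spec_step_Seq_inv in S1 as [(? & S1 & ->)|(? & _)]; [| discriminate].
  apply spec_step_Seq_inv in S2 as [(? & S2 & ->)|(? & _)]; [| discriminate].
  apply spec_step_Seq_inv in S1 as [(A' & S1 & ->)|(-> & -> & -> & -> & -> & -> & ->)].
  - apply spec_step_Seq_inv in S2 as [(A'' & S2 & ->)|(-> & _)]; [| inversion S1].
    destruct Hst as (Hpe & Hb & Hf & Hseq).
    assert (HstA : sim_state bt P PA A s rho1 mu1 rho2 mu2).
    { repeat split; auto.
      - eapply flag_inv_guard; [| exact Hf]. symmetry. apply leading_guard_while_body.
      - apply Hseq; auto.
      - eapply seq_same_obs_seq_l, Hseq; auto. }
    edestruct IHA as (Eo & Et & Ebt & s' & P' & PA' & HRA' & Hpe' & Hb' & Hf' & Hseq');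
      [exact HstA | exact S1 | exact S2 | subst].
    do 3 (split; [reflexivity |]).
    exists (Seq s' (While be c)), P', PA'. split; [| split; [| split; [| split]]]; auto.
    + eapply sim_while_body; eauto. apply (sim_spec_mono bt); auto. intros E; apply Hseq', E.
    + eapply flag_inv_guard; [| exact Hf']. apply leading_guard_while_body.
    + intros E. destruct (Hseq' E) as (? & ? & ?). auto using source_follows_seq.
  - apply spec_step_Seq_inv in S2 as [(? & S2 & ->)|(_ & -> & -> & -> & -> & _ & ->)];
      [inversion S2 |].
    do 3 (split; [reflexivity |]).
    inversion HRA; subst. destruct Hst as (Hpe & Hb & Hf & Hseq).
    exists (While be c), P1, PA1.
    split; [eapply sim_while; eauto | split; [eauto using pub_equiv_incl | split; [auto | split]]].
    + destruct bt.
      * left. eapply flag_raised_no_guard; [| exact Hf]. reflexivity.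
      * apply flag_inv_no_guard; [reflexivity | apply Hf].
    + intros ->. destruct (Hseq eq_refl). repeat split; eauto using pub_equiv_incl.
      right. exists []. split; constructor.
Qed.

(** * Noninterference *)

Lemma sim_lockstep {bt P PA t s Q QA} : sim bt P PA t s Q QA -> lockstep bt P PA t s Q QA.
Proof.
  induction 1.
  - apply lockstep_skip.
  - now apply lockstep_asgn.
  - eapply lockstep_seq; eauto.
  - now apply lockstep_if.
  - now apply lockstep_flag_seq.
  - now apply lockstep_skip_seq.
  - now apply lockstep_flag.
  - now apply lockstep_read.
  - now apply lockstep_read_mask.
  - now apply lockstep_mask.
  - now apply lockstep_write.
  - eapply lockstep_while; eauto.
  - eapply lockstep_while_unfolded; eauto.
  - eapply lockstep_while_body; eauto.
Qed.

Definition spec_inv (t : com) (rho1 : state) (mu1 : mem) (bt1 : bool)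
    (rho2 : state) (mu2 : mem) (bt2 : bool) : Prop :=
  bt1 = bt2 /\ exists s P PA Q QA,
    sim bt1 P PA t s Q QA /\ sim_state bt1 P PA t s rho1 mu1 rho2 mu2.

Lemma spec_inv_step {t rho1 mu1 bt1 rho2 mu2 bt2 t1 rho1' mu1' bt1' t2 rho2' mu2' bt2' d o1 o2} :
  spec_inv t rho1 mu1 bt1 rho2 mu2 bt2 ->
  spec_eval_small_step t rho1 mu1 bt1 t1 rho1' mu1' bt1' d o1 ->
  spec_eval_small_step t rho2 mu2 bt2 t2 rho2' mu2' bt2' d o2 ->
  o1 = o2 /\ t1 = t2 /\ spec_inv t1 rho1' mu1' bt1' rho2' mu2' bt2'.
Proof.
  intros (<- & s & P & PA & Q & QA & HR & Hst) S1 S2.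
  edestruct (sim_lockstep HR) as (Eo & Et & Ebt & s' & P' & PA' & HR' & Hpe & Hb & Hf & Hseq);
    [exact Hst | exact S1 | exact S2 | subst].
  do 3 (split; [reflexivity |]).
  exists s', P', PA', Q, QA. do 4 (split; [assumption |]).
  intros E. destruct (Hseq E) as (Hbt & Hpa & Hsrc). split; [exact Hpa |].
  destruct Hst as (_ & _ & _ & Hst). destruct (Hst Hbt) as [_ Hsame].
  destruct Hsrc as [(-> & -> & -> & -> & ->)|(os & H1 & H2)]; eauto using seq_same_obs_step.
Qed.

Lemma spec_inv_multi t rho1 mu1 bt1 t1 rho1' mu1' bt1' ds os1 :
  multi_spec t rho1 mu1 bt1 t1 rho1' mu1' bt1' ds os1 ->
  forall rho2 mu2 bt2 t2 rho2' mu2' bt2' os2,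
  multi_spec t rho2 mu2 bt2 t2 rho2' mu2' bt2' ds os2 ->
  spec_inv t rho1 mu1 bt1 rho2 mu2 bt2 -> os1 = os2.
Proof.
  induction 1 as [|c1 r1 m1 b1 c2 r2 m2 b2 c3 r3 m3 b3 ds1 ds2 os1 os2 S1 M1 IH];
    intros rho2 mu2 bt2 t2 rho2' mu2' bt2' os' M2 Hinv.
  - apply multi_spec_obs_length in M2. now destruct os'.
  - inversion M2 as [| ? ? ? ? c2' ? ? ? ? ? ? ? ds1' ds2' os1' os2' S2 M2']; subst.
    + apply multi_spec_obs_length in M1. apply spec_step_obs_length in S1.
      destruct ds1, ds2; simpl in *; try discriminate.
      destruct os1, os2; simpl in *; congruence.
    + destruct (app_inv_length ds1 ds1' ds2 ds2') as [<- <-];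
        [eapply spec_step_dirs_length; eauto | auto |].
      destruct (spec_inv_step Hinv S1 S2) as (-> & <- & Hinv').
      f_equal. eauto.
Qed.

Theorem theorem3p6 :
  forall (P : pub_vars) (PA : pub_arrs) (c : com)
         (rho1 rho2 : state) (mu1 mu2 : mem),
    ~ In bvar (used_vars c) ->
    rho1 bvar = 0 -> rho2 bvar = 0 ->
    (forall a, 0 < length (mu1 a)) ->
    (forall a, 0 < length (mu2 a)) ->
    pub_equiv P rho1 rho2 ->
    pub_equiv PA mu1 mu2 ->
    seq_same_obs c rho1 mu1 c rho2 mu2 ->
    forall (ac : acom) (P' : pub_vars) (PA' : pub_arrs),
      static_tracking c P PA true = (ac, P', PA') ->
      spec_same_obs (fs_flex_slh ac) rho1 mu1 false (fs_flex_slh ac) rho2 mu2 false.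
Proof.
  (* The array sizes do not matter: a masked access uses index 0 in both runs, and the
     shared directive decides between the in-bounds and the out-of-bounds step. *)
  intros P PA c rho1 rho2 mu1 mu2 Hb Hb1 Hb2 _ _ Hpe Hpa Hseq ac P' PA' E.
  destruct (translation_sim Hb E) as [HR Hg].
  intros ds ? ? ? ? ? ? ? ? ? ? M1 M2.
  eapply spec_inv_multi; [exact M1 | exact M2 |].
  split; [reflexivity |]. exists c, P, PA, P', PA'.
  split; [exact HR |]. repeat split; auto using guard_holds_none; congruence.
Qed.
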